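(* Let $(X,\mathcal F)$ be a measurable space, $\mu\colon\mathcal F\to[0,\infty]$ a submodular monotone measure, $A\in\mathcal F$, $p>1$ and $q$ with $1/p+1/q=1$. Let $f,g,h\colon X\to[0,\infty)$ be measurable and put $a=\int_A gf^p\,d\mu$, $b=\int_A hf^p\,d\mu$, assumed to lie in $(0,\infty)$. Then $$\int_A f\,d\mu\le 2^{1/p}H_{pq}(a,b),\qquad H_{pq}(a,b)=(ab)^{1/p}\Big(\int_A\frac{1}{(bg+ah)^{q-1}}\,d\mu\Big)^{1/q},$$ with the convention $1/0=\infty$. Moreover, equality holds if $(bg+ah)^q f^p=\gamma$ on $X$ for some constant $\gamma\ge0$, provided that either $\mu$ is modular or $gf^p$ and $hf^p$ are comonotone. All integrals are Choquet integrals.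
   Context: A monotone measure is a map $\mu\colon\mathcal F\to[0,\infty]$ with $\mu(\emptyset)=0$, $\mu(X)>0$ and $\mu(A)\le\mu(B)$ for $A\subset B$. It is submodular if $\mu(A\cap B)+\mu(A\cup B)\le\mu(A)+\mu(B)$ for all $A,B\in\mathcal F$, and modular if equality always holds. The Choquet integral of a measurable $f\colon X\to[0,\infty]$ on $A\in\mathcal F$ is $\int_A f\,d\mu=\int_0^\infty\mu(A\cap\{f\ge t\})\,dt$. Functions $\phi,\psi$ are comonotone if $(\phi(x)-\phi(y))(\psi(x)-\psi(y))\ge0$ for all $x,y$. *)

From Stdlib Require Import Reals Lra List Classical ClassicalEpsilon.
Open Scope R_scope.

(** Extended reals (only nonnegative values, and +oo, are used). *)
Inductive ER : Type := Fin (r : R) | Inf.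

Definition ERle (u v : ER) : Prop :=
  match u, v with
  | Fin x, Fin y => x <= y
  | _, Inf => True
  | Inf, Fin _ => False
  end.

Definition ERlt (u v : ER) : Prop := ERle u v /\ u <> v.

Definition ERadd (u v : ER) : ER :=
  match u, v with
  | Fin x, Fin y => Fin (x + y)
  | _, _ => Inf
  end.

(** multiplication of an extended real by a real scalar c >= 0, 0 * oo = 0 *)
Definition ERmulR (c : R) (u : ER) : ER :=
  match u with
  | Fin x => Fin (c * x)
  | Inf => if Req_EM_T c 0 then Fin 0 else Inf
  end.

(** real power for a nonnegative base and positive exponent: 0^y = 0 *)
Definition powR (x y : R) : R :=
  if Rle_dec x 0 then 0 else Rpower x y.

Definition ERpow (u : ER) (y : R) : ER :=
  match u with
  | Fin x => Fin (powR x y)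
  | Inf => Inf
  end.

Definition ERinv (r : R) : ER :=
  if Req_EM_T r 0 then Inf else Fin (/ r).

Definition is_ERsup (S : ER -> Prop) (s : ER) : Prop :=
  (forall e, S e -> ERle e s) /\
  (forall u, (forall e, S e -> ERle e u) -> ERle s u).

Definition ERsup (S : ER -> Prop) : ER :=
  epsilon (inhabits Inf) (fun s => is_ERsup S s).

Definition sigma_algebra {X : Type} (F : (X -> Prop) -> Prop) : Prop :=
  F (fun _ => False) /\
  (forall A, F A -> F (fun x => ~ A x)) /\
  (forall An : nat -> X -> Prop, (forall n, F (An n)) ->
     F (fun x => exists n, An n x)).

Definition monotone_measure {X : Type} (F : (X -> Prop) -> Prop)
  (mu : (X -> Prop) -> ER) : Prop :=
  mu (fun _ => False) = Fin 0 /\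
  ERlt (Fin 0) (mu (fun _ => True)) /\
  (forall A B, F A -> F B -> (forall x, A x -> B x) -> ERle (mu A) (mu B)).

Definition submodular {X : Type} (F : (X -> Prop) -> Prop)
  (mu : (X -> Prop) -> ER) : Prop :=
  forall A B, F A -> F B ->
    ERle (ERadd (mu (fun x => A x /\ B x)) (mu (fun x => A x \/ B x)))
         (ERadd (mu A) (mu B)).

Definition modular {X : Type} (F : (X -> Prop) -> Prop)
  (mu : (X -> Prop) -> ER) : Prop :=
  forall A B, F A -> F B ->
    ERadd (mu (fun x => A x /\ B x)) (mu (fun x => A x \/ B x))
    = ERadd (mu A) (mu B).

Definition measurable_fun {X : Type} (F : (X -> Prop) -> Prop) (f : X -> R) : Prop :=
  forall t : R, F (fun x => t <= f x).

Definition comonotone {X : Type} (phi psi : X -> R) : Prop :=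
  forall x y, 0 <= (phi x - phi y) * (psi x - psi y).

(** Lower Darboux sums of t |-> phi t over 0 = t0 < t1 < ... < tk:
    sum_i (t_i - t_{i-1}) * phi t_i. *)
Fixpoint incr_from (prev : R) (l : list R) : Prop :=
  match l with
  | nil => True
  | t :: l' => prev < t /\ incr_from t l'
  end.

Fixpoint lower_sum (phi : R -> ER) (prev : R) (l : list R) : ER :=
  match l with
  | nil => Fin 0
  | t :: l' => ERadd (ERmulR (t - prev) (phi t)) (lower_sum phi t l')
  end.

(** Lebesgue integral over (0,oo) of a nonincreasing [0,oo]-valued function,
    as the supremum of its lower step sums. *)
Definition int_0_inf (phi : R -> ER) : ER :=
  ERsup (fun e => exists l, incr_from 0 l /\ e = lower_sum phi 0 l).

Definition choquet {X : Type} (mu : (X -> Prop) -> ER) (A : X -> Prop)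
  (f : X -> ER) : ER :=
  int_0_inf (fun t => mu (fun x => A x /\ ERle (Fin t) (f x))).

Definition Hpq {X : Type} (mu : (X -> Prop) -> ER) (A : X -> Prop)
  (p q : R) (g h : X -> R) (a b : R) : ER :=
  ERmulR (powR (a * b) (/ p))
    (ERpow (choquet mu A (fun x => ERinv (powR (b * g x + a * h x) (q - 1))))
           (/ q)).

(* Young's inequality [f <= (s/p) w f^p + (s^(1-q)/q) w^(1-q)] with [w = b g + a h],
   integrated against the Choquet integral, gives [int f <= (s/p) 2ab + (s^(1-q)/q) int w^(1-q)]
   because the Choquet integral of a submodular measure is subadditive; minimising over
   [s > 0] gives the bound. The set [{w <= 0}] does not matter, being null as soon as
   [int w^(1-q)] is finite.
   Subadditivity is proved first for integer-valued functions, by peeling [f + g] one unit of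
   [g] at a time and applying submodularity to consecutive level sets, and then transferred to
   real functions through the discretisations [floor (u / d)], [d -> 0]. The same argument gives
   superadditivity when [mu] is modular or the integrands are comonotone. Under the extremal
   condition [w^q f^p = gamma], [f] is a multiple of [w^(1-q)]; then superadditivity yields
   [2ab <= gamma int w^(1-q)], which is exactly the reverse inequality. *)

From Stdlib Require Import Reals Lra Lia ZArith List Classical ClassicalEpsilon
  FunctionalExtensionality PropExtensionality.
Open Scope R_scope.

(** * Extended reals and the integral over (0, oo) *)

Lemma ERle_refl u : ERle u u.
Proof. destruct u; simpl; lra || auto. Qed.

Lemma ERle_trans u v w : ERle u v -> ERle v w -> ERle u w.
Proof. destruct u, v, w; simpl; intros; try lra; auto; contradiction. Qed.

Lemma ERle_antisym u v : ERle u v -> ERle v u -> u = v.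
Proof. destruct u, v; simpl; intros; try contradiction; auto. f_equal; lra. Qed.

Lemma ERle_Inf u : ERle u Inf.
Proof. destruct u; simpl; auto. Qed.

Lemma ERle_Fin_is_Fin u r : ERle u (Fin r) -> exists s, u = Fin s.
Proof. destruct u; simpl; [eauto|tauto]. Qed.

Lemma ERadd_le_compat u u' v v' :
  ERle u u' -> ERle v v' -> ERle (ERadd u v) (ERadd u' v').
Proof. destruct u, u', v, v'; simpl; intros; try lra; auto. Qed.

Lemma ERmulR_le_compat c u v : 0 <= c -> ERle u v -> ERle (ERmulR c u) (ERmulR c v).
Proof.
  destruct u, v; simpl; intros; try contradiction.
  - apply Rmult_le_compat_l; auto.
  - destruct (Req_EM_T c 0); simpl; auto. subst; lra.
  - destruct (Req_EM_T c 0); simpl; auto; lra.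
Qed.

Lemma ERmulR_Inf c : 0 < c -> ERmulR c Inf = Inf.
Proof. intros; simpl; destruct (Req_EM_T c 0); auto; lra. Qed.

Lemma ERmulR_mult a b u : 0 < a -> 0 < b -> ERmulR a (ERmulR b u) = ERmulR (a * b) u.
Proof.
  intros; destruct u; [simpl; f_equal; ring|].
  rewrite !ERmulR_Inf; auto. apply Rmult_lt_0_compat; auto.
Qed.

Lemma ERmulR_plus c u v : 0 < c -> ERmulR c (ERadd u v) = ERadd (ERmulR c u) (ERmulR c v).
Proof.
  intros; destruct u, v; simpl; try (destruct (Req_EM_T c 0); [lra|]); auto.
  f_equal; ring.
Qed.

Lemma ERmulR_1 u : ERmulR 1 u = u.
Proof. destruct u; simpl; [f_equal; ring|]. destruct (Req_EM_T 1 0); auto; lra. Qed.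

Lemma is_ERsup_exists (S : ER -> Prop) : (exists e, S e) -> exists s, is_ERsup S s.
Proof.
  intros [e0 He0].
  destruct (classic (S Inf)) as [HI|HI].
  { exists Inf; split; [intros; apply ERle_Inf|]. intros u Hu; apply Hu; auto. }
  destruct (classic (exists M, forall r, S (Fin r) -> r <= M)) as [[M HM]|HM].
  - destruct (completeness (fun r => S (Fin r))) as [l [Hl1 Hl2]].
    + exists M; intros r Hr; apply HM; auto.
    + destruct e0; [eauto|contradiction].
    + exists (Fin l); split.
      * intros [r|] He; [apply Hl1, He|contradiction].
      * intros [u|] Hu; simpl; auto. apply Hl2; intros r Hr; apply (Hu _ Hr).
  - exists Inf; split; [intros; apply ERle_Inf|].
    intros [u|] Hu; simpl; auto. apply HM; exists u; intros r Hr; apply (Hu _ Hr).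
Qed.

Lemma ERsup_spec (S : ER -> Prop) : (exists e, S e) -> is_ERsup S (ERsup S).
Proof. intros H; unfold ERsup; apply epsilon_spec, is_ERsup_exists, H. Qed.

Lemma int_0_inf_ge_lower_sum phi l :
  incr_from 0 l -> ERle (lower_sum phi 0 l) (int_0_inf phi).
Proof.
  intros Hl; unfold int_0_inf.
  destruct (ERsup_spec (fun e => exists l, incr_from 0 l /\ e = lower_sum phi 0 l)) as [H _].
  - exists (lower_sum phi 0 nil), nil; simpl; auto.
  - apply H; eauto.
Qed.

Lemma int_0_inf_lub phi e :
  (forall l, incr_from 0 l -> ERle (lower_sum phi 0 l) e) -> ERle (int_0_inf phi) e.
Proof.
  intros H; unfold int_0_inf.
  destruct (ERsup_spec (fun e => exists l, incr_from 0 l /\ e = lower_sum phi 0 l)) as [_ H2].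
  - exists (lower_sum phi 0 nil), nil; simpl; auto.
  - apply H2; intros e' [l [Hl ->]]; auto.
Qed.

Lemma int_0_inf_ge0 phi : ERle (Fin 0) (int_0_inf phi).
Proof. apply (int_0_inf_ge_lower_sum phi nil); simpl; auto. Qed.

Lemma int_0_inf_ge_rect phi t : 0 < t -> ERle (ERmulR t (phi t)) (int_0_inf phi).
Proof.
  intros Ht; eapply ERle_trans; [|apply (int_0_inf_ge_lower_sum phi (t :: nil)); simpl; auto].
  simpl; rewrite Rminus_0_r. destruct (ERmulR t (phi t)); simpl; lra || auto.
Qed.

Lemma lower_sum_le_compat phi psi prev l : 0 <= prev -> incr_from prev l ->
  (forall t, 0 < t -> ERle (phi t) (psi t)) ->
  ERle (lower_sum phi prev l) (lower_sum psi prev l).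
Proof.
  revert prev; induction l as [|t l IH]; intros prev Hp Hl H; simpl; [lra|].
  destruct Hl as [H1 H2]. apply ERadd_le_compat.
  - apply ERmulR_le_compat; [lra|]. apply H; lra.
  - apply IH; auto; lra.
Qed.

Lemma int_0_inf_le_compat phi psi :
  (forall t, 0 < t -> ERle (phi t) (psi t)) -> ERle (int_0_inf phi) (int_0_inf psi).
Proof.
  intros H; apply int_0_inf_lub; intros l Hl.
  eapply ERle_trans; [apply lower_sum_le_compat; eauto; lra|].
  apply int_0_inf_ge_lower_sum; auto.
Qed.

Lemma int_0_inf_le0 phi :
  (forall t, 0 < t -> ERle (phi t) (Fin 0)) -> ERle (int_0_inf phi) (Fin 0).
Proof.
  intros H. eapply ERle_trans; [apply (int_0_inf_le_compat phi (fun _ => Fin 0)); auto|].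
  apply int_0_inf_lub; intros l _.
  assert (E : forall prev, lower_sum (fun _ => Fin 0) prev l = Fin 0).
  { induction l as [|t l IH]; intros prev; simpl; auto. rewrite IH; simpl; f_equal; ring. }
  rewrite E; simpl; lra.
Qed.

(* [to_R Inf = 0] is a junk value: [to_R] is only applied to finite quantities. *)
Definition to_R (e : ER) : R := match e with Fin r => r | Inf => 0 end.

Lemma ERle_Fin_to_R e r : ERle e (Fin r) -> e = Fin (to_R e).
Proof. destruct e; simpl; tauto. Qed.

Fixpoint lower_sumR (phi : R -> R) (prev : R) (l : list R) : R :=
  match l with
  | nil => 0
  | t :: l' => (t - prev) * phi t + lower_sumR phi t l'
  end.

Fixpoint sum_values (phi : R -> R) (l : list R) : R :=
  match l with nil => 0 | t :: l' => phi t + sum_values phi l' end.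

Lemma lower_sum_Fin phi prev l : 0 <= prev -> incr_from prev l ->
  (forall t, 0 < t -> phi t = Fin (to_R (phi t))) ->
  lower_sum phi prev l = Fin (lower_sumR (fun t => to_R (phi t)) prev l).
Proof.
  revert prev; induction l as [|t l IH]; intros prev Hp Hl H; simpl; auto.
  destruct Hl as [H1 H2]. rewrite IH, (H t) by (auto; lra). reflexivity.
Qed.

Lemma sum_values_ge0 phi prev l : 0 <= prev -> incr_from prev l ->
  (forall t, 0 < t -> 0 <= phi t) -> 0 <= sum_values phi l.
Proof.
  revert prev; induction l as [|t l IH]; intros prev Hp Hl H; simpl; [lra|].
  destruct Hl as [H1 H2]. pose proof (H t ltac:(lra)). pose proof (IH t ltac:(lra) H2 H). lra.
Qed.

Lemma incr_from_scale c prev l :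
  0 < c -> incr_from prev l -> incr_from (prev / c) (map (fun t => t / c) l).
Proof.
  intros Hc; revert prev; induction l as [|t l IH]; intros prev Hl; simpl; auto.
  destruct Hl as [H1 H2]; split; auto.
  apply Rmult_lt_compat_r; auto. apply Rinv_0_lt_compat; auto.
Qed.

Lemma lower_sum_scale (phi : R -> ER) c prev l : 0 < c -> incr_from prev l ->
  lower_sum (fun t => phi (t / c)) prev l
  = ERmulR c (lower_sum phi (prev / c) (map (fun t => t / c) l)).
Proof.
  intros Hc; revert prev; induction l as [|t l IH]; intros prev Hl; simpl.
  - f_equal; ring.
  - destruct Hl as [H1 H2].
    assert (Hd : 0 < t / c - prev / c).
    { unfold Rdiv; rewrite <- Rmult_minus_distr_r.
      apply Rmult_lt_0_compat; [lra|]. apply Rinv_0_lt_compat; lra. }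
    rewrite IH, ERmulR_plus, ERmulR_mult by auto. f_equal. f_equal. field. lra.
Qed.

Lemma int_0_inf_scale_le (phi : R -> ER) c :
  0 < c -> ERle (int_0_inf (fun t => phi (t / c))) (ERmulR c (int_0_inf phi)).
Proof.
  intros Hc. apply int_0_inf_lub. intros l Hl.
  rewrite lower_sum_scale by auto. apply ERmulR_le_compat; [lra|].
  replace (0 / c) with 0 by (field; lra). apply int_0_inf_ge_lower_sum.
  replace 0 with (0 / c) by (field; lra). apply incr_from_scale; auto.
Qed.

Definition nfloor (r : R) : nat := Z.to_nat (up r - 1).

Lemma nfloor_spec r : 0 <= r -> INR (nfloor r) <= r < INR (nfloor r) + 1.
Proof.
  intros Hr. destruct (archimed r) as [H1 H2]. unfold nfloor.
  assert (Hz : (0 <= up r - 1)%Z).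
  { assert (Hu : (0 < up r)%Z) by (apply lt_IZR; simpl; lra). lia. }
  rewrite INR_IZR_INZ, Z2Nat.id by lia. rewrite minus_IZR. simpl. lra.
Qed.

Lemma nfloor_ge_iff k r : 0 <= r -> ((k <= nfloor r)%nat <-> INR k <= r).
Proof.
  intros Hr; destruct (nfloor_spec r Hr) as [H1 H2]; split; intros H.
  - apply le_INR in H; lra.
  - assert (INR k < INR (nfloor r + 1)) by (rewrite plus_INR; simpl; lra).
    apply INR_lt in H0. lia.
Qed.

Lemma nfloor_le_compat r r' : 0 <= r -> r <= r' -> (nfloor r <= nfloor r')%nat.
Proof. intros H1 H2. apply nfloor_ge_iff; [lra|]. destruct (nfloor_spec r H1); lra. Qed.

Lemma inv_INR_S_lt e : 0 < e -> exists n : nat, / INR (S n) < e.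
Proof.
  intros He. destruct (archimed_cor1 e He) as [N [HN HN0]].
  exists (pred N). rewrite Nat.succ_pred_pos by lia. exact HN.
Qed.

Lemma inv_INR_S_pos n : 0 < / INR (S n).
Proof. apply Rinv_0_lt_compat, lt_0_INR; lia. Qed.

Lemma le_epsilon_mult a b c : 0 <= c -> (forall d, 0 < d -> a <= b + d * c) -> a <= b.
Proof.
  intros Hc H. apply le_epsilon; intros e He.
  specialize (H (e / (c + 1)) ltac:(apply Rdiv_lt_0_compat; lra)).
  enough (e / (c + 1) * c <= e) by lra.
  apply (Rmult_le_reg_r (c + 1)); [lra|]. field_simplify; [nra|lra].
Qed.

Lemma Rpower_pos x y : 0 < Rpower x y.
Proof. apply exp_pos. Qed.

Lemma powR_ge0 x y : 0 <= powR x y.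
Proof. unfold powR; destruct (Rle_dec x 0); [lra|left; apply Rpower_pos]. Qed.

Lemma powR_Rpower x y : 0 < x -> powR x y = Rpower x y.
Proof. intros; unfold powR; destruct (Rle_dec x 0); [lra|auto]. Qed.

Lemma powR_nonpos x y : x <= 0 -> powR x y = 0.
Proof. intros; unfold powR; destruct (Rle_dec x 0); [auto|lra]. Qed.

Lemma Rpower_le_iff a b c : 0 < c -> 0 < a -> 0 < b -> (a <= b <-> Rpower a c <= Rpower b c).
Proof.
  intros Hc Ha Hb; split; intros H.
  - apply Rle_Rpower_l; lra.
  - apply Rnot_lt_le; intros Hlt.
    assert (Rpower b c < Rpower a c) by (apply Rlt_Rpower_l; lra). lra.
Qed.

Lemma Rpower_div a b y : 0 < a -> 0 < b -> Rpower (b / a) y = Rpower b y * Rpower a (- y).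
Proof.
  intros Ha Hb. unfold Rdiv. rewrite <- Rpower_mult_distr by (auto; apply Rinv_0_lt_compat; auto).
  f_equal. unfold Rpower. rewrite ln_Rinv by auto. f_equal. ring.
Qed.

Lemma Rpower_le_inv_iff t W e : 0 < t -> 0 < W -> 0 < e ->
  (t <= / Rpower W e <-> W <= Rpower (/ t) (/ e)).
Proof.
  intros Ht HW He. assert (HR := Rpower_pos W e).
  assert (Hit : 0 < / t) by (apply Rinv_0_lt_compat; auto).
  rewrite (Rpower_le_iff W (Rpower (/ t) (/ e)) e) by (auto; apply Rpower_pos).
  rewrite Rpower_mult, Rinv_l, Rpower_1 by (auto; lra).
  split; intros H.
  - rewrite <- (Rinv_inv (Rpower W e)). apply Rinv_le_contravar; auto.
  - rewrite <- (Rinv_inv t). apply Rinv_le_contravar; auto.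
Qed.

Lemma conjugate_exponent p q : 1 < p -> / p + / q = 1 -> 0 < / p < 1 /\ 1 < q.
Proof.
  intros Hp Hconj.
  assert (Hip : 0 < / p) by (apply Rinv_0_lt_compat; lra).
  assert (Hip1 : / p < 1) by (rewrite <- Rinv_1; apply Rinv_lt_contravar; lra).
  split; [lra|].
  assert (Hiq : 0 < / q < 1) by lra.
  rewrite <- (Rinv_inv q), <- Rinv_1. apply Rinv_lt_contravar; lra.
Qed.

Lemma exp_convex th L1 L2 : 0 <= th <= 1 ->
  exp (th * L1 + (1 - th) * L2) <= th * exp L1 + (1 - th) * exp L2.
Proof.
  intros Hth. set (m := th * L1 + (1 - th) * L2).
  (* tangent line of exp at m *)
  assert (Htan : forall L, exp m * (1 + (L - m)) <= exp L).
  { intros L. replace (exp L) with (exp m * exp (L - m)) by (rewrite <- exp_plus; f_equal; ring).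
    apply Rmult_le_compat_l; [left; apply exp_pos|apply exp_ineq1_le]. }
  pose proof (Htan L1); pose proof (Htan L2).
  assert (E : th * (exp m * (1 + (L1 - m))) + (1 - th) * (exp m * (1 + (L2 - m))) = exp m)
    by (unfold m; ring).
  nra.
Qed.

Lemma Rpower_am_gm A B p q : 1 < p -> / p + / q = 1 -> 0 < A -> 0 < B ->
  Rpower A (/ p) * Rpower B (/ q) <= A / p + B / q.
Proof.
  intros Hp Hconj HA HB. destruct (conjugate_exponent p q Hp Hconj) as [Hip _].
  unfold Rpower. rewrite <- exp_plus.
  replace (/ q) with (1 - / p) by lra.
  eapply Rle_trans; [apply exp_convex; lra|]. rewrite !exp_ln by auto. replace (1 - / p) with (/ q) by lra. unfold Rdiv. right; ring.
Qed.

Lemma young_scaled s W x p q : 1 < p -> / p + / q = 1 -> 0 < s -> 0 < W -> 0 <= x ->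
  x <= s / p * (W * powR x p) + Rpower s (1 - q) / q * / Rpower W (q - 1).
Proof.
  intros Hp Hconj Hs HW Hx. destruct (conjugate_exponent p q Hp Hconj) as [Hip Hq].
  assert (HB : 0 < Rpower s (1 - q) * / Rpower W (q - 1))
    by (apply Rmult_lt_0_compat; [apply Rpower_pos|apply Rinv_0_lt_compat, Rpower_pos]).
  destruct Hx as [Hx| <-].
  2:{ rewrite powR_nonpos, !Rmult_0_r, Rplus_0_l by lra. unfold Rdiv.
      rewrite Rmult_assoc, (Rmult_comm (/ q)), <- Rmult_assoc.
      apply Rmult_le_pos; [lra|left; apply Rinv_0_lt_compat; lra]. }
  rewrite powR_Rpower by auto.
  set (A := s * (W * Rpower x p)). set (B := Rpower s (1 - q) * / Rpower W (q - 1)).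
  assert (HA : 0 < A) by (unfold A; repeat apply Rmult_lt_0_compat; auto; apply Rpower_pos).
  enough (E : Rpower A (/ p) * Rpower B (/ q) = x).
  { rewrite <- E at 1. eapply Rle_trans; [apply Rpower_am_gm; auto|].
    unfold A, B, Rdiv; right; ring. }
  apply ln_inv; [apply Rmult_lt_0_compat; apply Rpower_pos|auto|].
  assert (E1 : / q * (1 - q) = - / p) by (rewrite Rmult_minus_distr_l, Rinv_l; lra).
  unfold A, B. rewrite ln_mult, !ln_Rpower, !ln_mult, ln_Rinv, !ln_Rpower
    by (try apply Rmult_lt_0_compat; try apply Rinv_0_lt_compat; auto; apply Rpower_pos).
  replace (/ q * ((1 - q) * ln s + - ((q - 1) * ln W))) with (/ q * (1 - q) * (ln s + ln W))
    by ring.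
  rewrite E1. field. lra.
Qed.

Lemma young_scaled_optimum al be p q : 1 < p -> / p + / q = 1 -> 0 < al -> 0 < be ->
  let s := Rpower (be / al) (/ q) in
  s / p * al + Rpower s (1 - q) / q * be = Rpower al (/ p) * Rpower be (/ q).
Proof.
  intros Hp Hconj Ha Hb s. destruct (conjugate_exponent p q Hp Hconj) as [Hip Hq].
  assert (E1 : s * al = Rpower al (/ p) * Rpower be (/ q)).
  { unfold s. rewrite Rpower_div by auto.
    replace (Rpower be (/ q) * Rpower al (- / q) * al)
      with (Rpower be (/ q) * (Rpower al 1 * Rpower al (- / q))) by (rewrite Rpower_1 by auto; ring).
    rewrite <- Rpower_plus. replace (1 + - / q) with (/ p) by lra. ring. }
  assert (E2 : Rpower s (1 - q) * be = Rpower al (/ p) * Rpower be (/ q)).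
  { unfold s. rewrite Rpower_mult.
    replace (/ q * (1 - q)) with (- / p) by (rewrite Rmult_minus_distr_l, Rinv_l; lra).
    rewrite Rpower_div, Ropp_involutive by auto.
    replace (Rpower be (- / p) * Rpower al (/ p) * be)
      with (Rpower al (/ p) * (Rpower be (- / p) * Rpower be 1)) by (rewrite (Rpower_1 be) by auto; ring).
    rewrite <- Rpower_plus. replace (- / p + 1) with (/ q) by lra. ring. }
  unfold Rdiv.
  replace (s * / p * al + Rpower s (1 - q) * / q * be)
    with (/ p * (s * al) + / q * (Rpower s (1 - q) * be)) by ring.
  rewrite E1, E2, <- Rmult_plus_distr_r, Hconj. ring.
Qed.

Lemma Rpower_eq_solve W x g p q : 1 < p -> / p + / q = 1 -> 0 < W -> 0 < x ->
  Rpower W q * Rpower x p = g -> x = Rpower g (/ p) * / Rpower W (q - 1).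
Proof.
  intros Hp Hconj HW Hx E. destruct (conjugate_exponent p q Hp Hconj) as [Hip Hq].
  assert (Hg : 0 < g) by (rewrite <- E; apply Rmult_lt_0_compat; apply Rpower_pos).
  apply ln_inv; auto.
  - apply Rmult_lt_0_compat; [apply Rpower_pos|apply Rinv_0_lt_compat, Rpower_pos].
  - rewrite ln_mult, ln_Rinv, !ln_Rpower, <- E, ln_mult, !ln_Rpower
      by (try apply Rinv_0_lt_compat; apply Rpower_pos).
    assert (E3 : / p * q = q - 1).
    { replace (/ p) with (1 - / q) by lra. rewrite Rmult_minus_distr_r, Rinv_l; lra. }
    replace (/ p * (q * ln W + p * ln x) + - ((q - 1) * ln W))
      with ((/ p * q - (q - 1)) * ln W + (/ p * p) * ln x) by ring.
    rewrite E3, Rinv_l by lra. ring.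
Qed.

Lemma Rpower_mult_eq_div W x g q : 0 < W ->
  Rpower W q * x = g -> W * x = g * / Rpower W (q - 1).
Proof.
  intros HW E. rewrite <- E.
  replace q with (1 + (q - 1)) at 1 by ring. rewrite Rpower_plus, Rpower_1 by auto.
  field. apply Rgt_not_eq, Rpower_pos.
Qed.

Lemma Rpower_conj_mult_le al g be p q : 1 < p -> / p + / q = 1 -> 0 < al -> 0 < be ->
  al <= g * be -> Rpower al (/ p) * Rpower be (/ q) <= Rpower g (/ p) * be.
Proof.
  intros Hp Hconj Ha Hb H.
  assert (Hg : 0 < g) by (apply Rnot_le_lt; intro; nra).
  apply Rle_trans with (Rpower (g * be) (/ p) * Rpower be (/ q)).
  - apply Rmult_le_compat_r; [left; apply Rpower_pos|].
    apply Rle_Rpower_l; [left; apply (conjugate_exponent p q Hp Hconj)|lra].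
  - rewrite <- Rpower_mult_distr, Rmult_assoc, <- Rpower_plus, Hconj, Rpower_1 by auto. lra.
Qed.

(** * Finite sums and grids *)

(* [sum_after psi k M = psi (k+1) + ... + psi (k+M)] *)
Fixpoint sum_after (psi : nat -> R) (k M : nat) : R :=
  match M with O => 0 | S M' => psi (S k) + sum_after psi (S k) M' end.

Lemma sum_after_split psi k a b :
  sum_after psi k (a + b) = sum_after psi k a + sum_after psi (k + a) b.
Proof.
  revert k; induction a as [|a IH]; intros k; simpl.
  - rewrite Nat.add_0_r; ring.
  - rewrite IH. replace (S k + a)%nat with (k + S a)%nat by lia. ring.
Qed.

Lemma sum_after_le_compat psi psi' k M :
  (forall j, (k < j <= k + M)%nat -> psi j <= psi' j) -> sum_after psi k M <= sum_after psi' k M.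
Proof.
  revert k; induction M as [|M IH]; intros k H; simpl; [lra|].
  apply Rplus_le_compat; [apply H; lia|apply IH; intros; apply H; lia].
Qed.

Lemma sum_after_ext psi psi' k M :
  (forall j, (k < j <= k + M)%nat -> psi j = psi' j) -> sum_after psi k M = sum_after psi' k M.
Proof. intros H; apply Rle_antisym; apply sum_after_le_compat; intros j Hj; rewrite H; auto; lra. Qed.

Lemma sum_after_const0 k M : sum_after (fun _ => 0) k M = 0.
Proof. revert k; induction M; intros; simpl; auto. rewrite IHM; ring. Qed.

Lemma sum_after_ge0 psi k M : (forall j, (k < j)%nat -> 0 <= psi j) -> 0 <= sum_after psi k M.
Proof.
  intros H. rewrite <- (sum_after_const0 k M). apply sum_after_le_compat; intros; apply H; lia.
Qed.

Lemma sum_after_plus psi psi' k M :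
  sum_after (fun j => psi j + psi' j) k M = sum_after psi k M + sum_after psi' k M.
Proof. revert k; induction M as [|M IH]; intros k; simpl; [ring|]. rewrite IH; ring. Qed.

Lemma sum_after_scal c psi k M : sum_after (fun j => c * psi j) k M = c * sum_after psi k M.
Proof. revert k; induction M as [|M IH]; intros k; simpl; [ring|]. rewrite IH; ring. Qed.

Lemma sum_after_le_length psi k M M' : (forall j, (k < j)%nat -> 0 <= psi j) -> (M <= M')%nat ->
  sum_after psi k M <= sum_after psi k M'.
Proof.
  intros H HM. replace M' with (M + (M' - M))%nat by lia. rewrite sum_after_split.
  enough (0 <= sum_after psi (k + M) (M' - M)) by lra.
  apply sum_after_ge0; intros; apply H; lia.
Qed.

Lemma sum_after_ge_const psi k d c : (forall j, (k < j <= k + d)%nat -> c <= psi j) ->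
  INR d * c <= sum_after psi k d.
Proof.
  intros H. rewrite <- (Rmult_1_l c) at 1.
  replace (INR d * (1 * c)) with (sum_after (fun _ => c) k d).
  - apply sum_after_le_compat; auto.
  - clear; revert k; induction d as [|d IH]; intros k; simpl sum_after; [simpl; ring|].
    rewrite IH, S_INR; ring.
Qed.

Lemma sum_after_shift psi k M : sum_after (fun j => psi (S j)) k M = sum_after psi (S k) M.
Proof. revert k; induction M as [|M IH]; intros k; simpl; auto. rewrite IH; auto. Qed.

Lemma sum_after_telescope (a : nat -> R) k M :
  sum_after (fun j => a (j - 1)%nat - a j) k M = a k - a (k + M)%nat.
Proof.
  revert k; induction M as [|M IH]; intros k; simpl.
  - rewrite Nat.add_0_r; ring.
  - rewrite IH, Nat.sub_0_r. replace (S k + M)%nat with (k + S M)%nat by lia. ring.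
Qed.

Lemma sum_after_last psi k M : sum_after psi k (S M) = sum_after psi k M + psi (k + S M)%nat.
Proof.
  replace (S M) with (M + 1)%nat by lia. rewrite sum_after_split. simpl.
  replace (S (k + M)) with (k + (M + 1))%nat by lia. ring.
Qed.

Fixpoint grid (d : R) (k M : nat) : list R :=
  match M with O => nil | S M' => INR (S k) * d :: grid d (S k) M' end.

Lemma grid_incr d k M : 0 < d -> incr_from (INR k * d) (grid d k M).
Proof.
  intros Hd; revert k; induction M as [|M IH]; intros k; cbn [grid incr_from]; auto.
  split; auto. rewrite S_INR. lra.
Qed.

Lemma lower_sumR_grid phi d k M :
  lower_sumR phi (INR k * d) (grid d k M) = d * sum_after (fun j => phi (INR j * d)) k M.
Proof.
  revert k; induction M as [|M IH]; intros k; cbn [grid lower_sumR sum_after]; [ring|].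
  rewrite IH, S_INR. ring.
Qed.

Lemma lower_sumR_le_grid_sum (phi : R -> R) (psi : nat -> R) d c :
  0 < d -> 0 <= c -> (forall t, 0 < t -> 0 <= phi t) ->
  (forall t j, 0 < t -> (1 <= j)%nat -> INR j <= t / d - c -> phi t <= psi j) ->
  forall l prev m, 0 <= prev -> incr_from prev l -> INR m <= Rmax 0 (prev / d - c) ->
  exists D, lower_sumR phi prev l <= d * sum_after psi m D + d * (1 + c) * sum_values phi l.
Proof.
  intros Hd Hc Hphi Hpsi l. induction l as [|t l IH]; intros prev m Hp Hl Hm; simpl.
  { exists O; simpl; lra. }
  destruct Hl as [Ht Hl].
  assert (H0 : 0 <= Rmax 0 (t / d - c)) by apply Rmax_l.
  destruct (nfloor_spec _ H0) as [Hf1 Hf2].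
  set (m' := nfloor (Rmax 0 (t / d - c))) in *.
  assert (Hprev : prev / d <= t / d) by (apply Rmult_le_compat_r; [left; apply Rinv_0_lt_compat|]; lra).
  assert (Hmm : (m <= m')%nat).
  { assert (Rmax 0 (prev / d - c) <= Rmax 0 (t / d - c)) by (apply Rle_max_compat_l; lra).
    assert (INR m < INR (m' + 1)) by (rewrite plus_INR; simpl; lra).
    apply INR_lt in H1. lia. }
  destruct (IH t m') as [D HD]; [lra|auto|lra|].
  exists ((m' - m) + D)%nat. rewrite sum_after_split. replace (m + (m' - m))%nat with m' by lia.
  assert (Hblock : INR (m' - m) * phi t <= sum_after psi m (m' - m)).
  { apply sum_after_ge_const. intros j Hj.
    apply Hpsi; [lra|lia|].
    assert (Hjm : INR j <= INR m') by (apply le_INR; lia).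
    unfold Rmax in *. destruct (Rle_dec 0 (t / d - c)); [lra|].
    assert (m' = O) by (apply INR_eq; simpl; pose proof (pos_INR m'); lra). lia. }
  assert (Hpt : 0 <= phi t) by (apply Hphi; lra).
  assert (Hcount : t - prev <= d * (INR (m' - m) + 1 + c)).
  { rewrite minus_INR by auto.
    assert (Rmax 0 (prev / d - c) <= prev / d).
    { apply Rmax_lub; [|lra]. apply Rmult_le_pos; [lra|left; apply Rinv_0_lt_compat; lra]. }
    assert (t / d - c <= Rmax 0 (t / d - c)) by apply Rmax_r.
    assert (d * (t / d - c - 1 - prev / d) <= d * (INR m' - INR m)) by (apply Rmult_le_compat_l; lra).
    replace (d * (t / d - c - 1 - prev / d)) with (t - prev - d * (1 + c)) in H2 by (field; lra).
    lra. }
  apply (Rmult_le_compat_r (phi t)) in Hcount; auto.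
  apply (Rmult_le_compat_l d) in Hblock; lra || nra.
Qed.

(** * Measurable sets and functions *)

Lemma pred_ext {X : Type} (P Q : X -> Prop) : (forall x, P x <-> Q x) -> P = Q.
Proof.
  intros H; apply functional_extensionality; intros x; apply propositional_extensionality; auto.
Qed.

Section Measurable.

Context {X : Type} (F : (X -> Prop) -> Prop).
Hypothesis HF : sigma_algebra F.

Lemma measurable_ext P Q : F P -> (forall x, P x <-> Q x) -> F Q.
Proof. intros H E; rewrite <- (pred_ext P Q E); auto. Qed.

Lemma measurable_empty : F (fun _ => False).
Proof. apply HF. Qed.

Lemma measurable_compl P : F P -> F (fun x => ~ P x).
Proof. apply HF. Qed.

Lemma measurable_full : F (fun _ => True).
Proof. eapply measurable_ext; [apply measurable_compl, measurable_empty|]. intros; tauto. Qed.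

Lemma measurable_countable_union (An : nat -> X -> Prop) :
  (forall n, F (An n)) -> F (fun x => exists n, An n x).
Proof. apply HF. Qed.

Lemma measurable_countable_inter (An : nat -> X -> Prop) :
  (forall n, F (An n)) -> F (fun x => forall n, An n x).
Proof.
  intros H. eapply measurable_ext.
  - apply measurable_compl, (measurable_countable_union (fun n x => ~ An n x)).
    intros; apply measurable_compl; auto.
  - intros x; split.
    + intros Hn n; apply NNPP; intros Hc; apply Hn; eauto.
    + intros Hn [n Hc]; auto.
Qed.

Lemma measurable_union P Q : F P -> F Q -> F (fun x => P x \/ Q x).
Proof.
  intros HP HQ. eapply measurable_ext.
  - apply (measurable_countable_union (fun n => match n with O => P | _ => Q end)).
    intros [|n]; auto.
  - intros x; split.
    + intros [[|n] H]; auto.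
    + intros [H|H]; [exists O|exists 1%nat]; auto.
Qed.

Lemma measurable_inter P Q : F P -> F Q -> F (fun x => P x /\ Q x).
Proof.
  intros HP HQ. eapply measurable_ext.
  - apply (measurable_compl (fun x => ~ P x \/ ~ Q x)), measurable_union; apply measurable_compl; auto.
  - intros x; split; [intros H; split; apply NNPP; tauto | tauto].
Qed.

Lemma measurable_fun_gt u : measurable_fun F u -> forall t, F (fun x => t < u x).
Proof.
  intros Hu t. eapply measurable_ext.
  - apply (measurable_countable_union (fun n x => t + / INR (S n) <= u x)); intros; apply Hu.
  - intros x; split.
    + intros [n Hn]. pose proof (inv_INR_S_pos n). lra.
    + intros Ht. destruct (inv_INR_S_lt (u x - t)) as [n Hn]; [lra|]. exists n; lra.
Qed.

Lemma measurable_fun_le u : measurable_fun F u -> forall t, F (fun x => u x <= t).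
Proof.
  intros Hu t. eapply measurable_ext; [apply measurable_compl, (measurable_fun_gt u Hu t)|].
  intros x; split; intros; lra.
Qed.

Lemma measurable_fun_of_gt u : (forall t, F (fun x => t < u x)) -> measurable_fun F u.
Proof.
  intros H t. eapply measurable_ext.
  - apply (measurable_countable_inter (fun n x => t - / INR (S n) < u x)); intros; apply H.
  - intros x; split.
    + intros Hn. apply Rnot_lt_le; intros Hc.
      destruct (inv_INR_S_lt (t - u x)) as [n Hn']; [lra|].
      specialize (Hn n). lra.
    + intros Ht n. pose proof (inv_INR_S_pos n). lra.
Qed.

Lemma measurable_fun_const c : measurable_fun F (fun _ => c).
Proof.
  intros t. destruct (Rle_dec t c).
  - eapply measurable_ext; [apply measurable_full|]. intros; tauto.
  - eapply measurable_ext; [apply measurable_empty|]. intros; split; [tauto|lra].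
Qed.

Lemma measurable_fun_scal c u : 0 <= c -> measurable_fun F u -> measurable_fun F (fun x => c * u x).
Proof.
  intros Hc Hu t. destruct (Req_dec c 0) as [->|Hc0].
  - eapply measurable_ext; [apply (measurable_fun_const 0 t)|]. intros x; rewrite Rmult_0_l; tauto.
  - eapply measurable_ext; [apply (Hu (t / c))|]. intros x; split; intros H.
    + apply (Rmult_le_compat_l c) in H; [|lra]. field_simplify in H; lra.
    + apply (Rmult_le_reg_l c); [lra|]. field_simplify; lra.
Qed.

(* [t < u + v] iff [k / (n+1) <= u] and [t - k / (n+1) < v] for some rational [k / (n+1)]. *)
Lemma measurable_fun_plus u v : measurable_fun F u -> measurable_fun F v ->
  (forall x, 0 <= u x) -> measurable_fun F (fun x => u x + v x).
Proof.
  intros Hu Hv Hu0. apply measurable_fun_of_gt. intros t.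
  eapply measurable_ext.
  - apply (measurable_countable_union (fun n x => exists k : nat,
       INR k / INR (S n) <= u x /\ t - INR k / INR (S n) < v x)).
    intros n. apply measurable_countable_union. intros k.
    apply measurable_inter; [apply Hu|apply measurable_fun_gt; auto].
  - intros x; split.
    + intros [n [k [H1 H2]]]; lra.
    + intros Ht. destruct (inv_INR_S_lt (u x + v x - t)) as [n Hn]; [lra|].
      exists n, (nfloor (u x * INR (S n))).
      assert (HN : 0 < INR (S n)) by (apply lt_0_INR; lia).
      assert (H0 : 0 <= u x * INR (S n)) by (apply Rmult_le_pos; auto; lra).
      destruct (nfloor_spec _ H0) as [H1 H2].
      set (k := nfloor (u x * INR (S n))) in *.
      split.
      * apply (Rmult_le_reg_r (INR (S n))); auto. field_simplify; lra.
      * assert (u x - / INR (S n) < INR k / INR (S n)).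
        { apply (Rmult_lt_reg_r (INR (S n))); auto. field_simplify; lra. }
        lra.
Qed.

Lemma measurable_fun_mult u v : measurable_fun F u -> measurable_fun F v ->
  (forall x, 0 <= u x) -> (forall x, 0 <= v x) -> measurable_fun F (fun x => u x * v x).
Proof.
  intros Hu Hv Hu0 Hv0. apply measurable_fun_of_gt. intros t.
  destruct (Rlt_dec t 0) as [Ht0|Ht0].
  { eapply measurable_ext; [apply measurable_full|]. intros x; split; auto; intros _.
    pose proof (Rmult_le_pos _ _ (Hu0 x) (Hv0 x)); lra. }
  eapply measurable_ext.
  - apply (measurable_countable_union (fun n x => exists k : nat,
       INR k / INR (S n) <= u x /\ t < INR k / INR (S n) * v x)).
    intros n. apply measurable_countable_union. intros k.
    apply measurable_inter; [apply Hu|apply measurable_fun_gt, measurable_fun_scal; auto].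
    apply Rmult_le_pos; [apply pos_INR|left; apply inv_INR_S_pos].
  - intros x; split.
    + intros [n [k [H1 H2]]]. pose proof (Rmult_le_compat_r _ _ _ (Hv0 x) H1). lra.
    + intros Ht.
      assert (Hux : 0 < u x) by (destruct (Hu0 x) as [|E]; auto; rewrite <- E in Ht; lra).
      assert (Hvx : 0 < v x) by (destruct (Hv0 x) as [|E]; auto; rewrite <- E in Ht; lra).
      assert (Htv : t / v x < u x) by (apply (Rmult_lt_reg_r (v x)); auto; field_simplify; lra).
      destruct (inv_INR_S_lt (u x - t / v x)) as [n Hn]; [lra|].
      exists n, (nfloor (u x * INR (S n))).
      assert (HN : 0 < INR (S n)) by (apply lt_0_INR; lia).
      assert (H0 : 0 <= u x * INR (S n)) by (apply Rmult_le_pos; lra).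
      destruct (nfloor_spec _ H0) as [H1 H2].
      set (k := nfloor (u x * INR (S n))) in *.
      split.
      * apply (Rmult_le_reg_r (INR (S n))); auto. field_simplify; lra.
      * assert (u x - / INR (S n) < INR k / INR (S n)).
        { apply (Rmult_lt_reg_r (INR (S n))); auto. field_simplify; lra. }
        assert (H3 : t / v x < INR k / INR (S n)) by lra.
        apply (Rmult_lt_compat_r (v x)) in H3; auto.
        field_simplify in H3; lra.
Qed.

Lemma measurable_fun_powR u p : measurable_fun F u -> 0 < p ->
  measurable_fun F (fun x => powR (u x) p).
Proof.
  intros Hu Hp t. destruct (Rle_dec t 0) as [Ht|Ht].
  { eapply measurable_ext; [apply measurable_full|]. intros x; split; auto; intros _.
    pose proof (powR_ge0 (u x) p); lra. }
  eapply measurable_ext; [apply (Hu (Rpower t (/ p)))|].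
  intros x. assert (Hrt := Rpower_pos t (/ p)).
  destruct (Rle_dec (u x) 0) as [Hux|Hux].
  - rewrite powR_nonpos by auto. split; intros; lra.
  - rewrite powR_Rpower, (Rpower_le_iff _ _ p), Rpower_mult, Rinv_l, Rpower_1 by lra. tauto.
Qed.

End Measurable.

(** * The Choquet integral *)

Section Choquet.

Context {X : Type} (F : (X -> Prop) -> Prop) (mu : (X -> Prop) -> ER) (A : X -> Prop).
Hypothesis HF : sigma_algebra F.
Hypothesis Hmu : monotone_measure F mu.
Hypothesis HA : F A.

Lemma mu_le_compat B C : F B -> F C -> (forall x, B x -> C x) -> ERle (mu B) (mu C).
Proof. destruct Hmu as [_ [_ H]]; apply H. Qed.

Lemma mu_empty B : (forall x, ~ B x) -> mu B = Fin 0.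
Proof.
  intros H. destruct Hmu as [H0 _]. rewrite <- H0. f_equal.
  apply pred_ext. intros x; split; [apply H|tauto].
Qed.

Lemma mu_ge0 B : F B -> ERle (Fin 0) (mu B).
Proof.
  intros HB. rewrite <- (mu_empty (fun _ => False)) by auto.
  apply mu_le_compat; auto. apply measurable_empty, HF. tauto.
Qed.

Lemma to_R_mu_ge0 B : F B -> 0 <= to_R (mu B).
Proof. intros HB; pose proof (mu_ge0 B HB); destruct (mu B); simpl in *; lra. Qed.

Lemma to_R_mu_le_compat B C : F B -> F C -> (forall x, B x -> C x) ->
  mu C = Fin (to_R (mu C)) -> to_R (mu B) <= to_R (mu C).
Proof.
  intros HB HC H HCf. pose proof (mu_le_compat B C HB HC H) as T.
  rewrite HCf in T. destruct (mu B); simpl in *; auto; contradiction.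
Qed.

Lemma mu_union_le : submodular F mu -> forall B C, F B -> F C ->
  ERle (mu (fun x => B x \/ C x)) (ERadd (mu B) (mu C)).
Proof.
  intros Hs B C HB HC. specialize (Hs B C HB HC).
  pose proof (mu_ge0 _ (measurable_inter F HF _ _ HB HC)) as H0.
  destruct (mu (fun x => B x /\ C x)), (mu (fun x => B x \/ C x)), (mu B), (mu C);
    simpl in *; auto; lra.
Qed.

Lemma choquet_le_compat (u v : X -> ER) :
  (forall t, 0 < t -> F (fun x => A x /\ ERle (Fin t) (u x))) ->
  (forall t, 0 < t -> F (fun x => A x /\ ERle (Fin t) (v x))) ->
  (forall x, A x -> ERle (u x) (v x)) ->
  ERle (choquet mu A u) (choquet mu A v).
Proof.
  intros Hu Hv H. apply int_0_inf_le_compat. intros t Ht.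
  apply mu_le_compat; auto. intros x [Ha Hx]; split; auto. eapply ERle_trans; eauto.
Qed.

Definition level (u : X -> R) (t : R) : X -> Prop := fun x => A x /\ t <= u x.

Definition cint (u : X -> R) : ER := choquet mu A (fun x => Fin (u x)).

Lemma cint_levels u : cint u = int_0_inf (fun t => mu (level u t)).
Proof. reflexivity. Qed.

Lemma level_measurable u t : measurable_fun F u -> F (level u t).
Proof. intros Hu; apply (measurable_inter F HF); auto. Qed.

Lemma cint_le_compat u v : measurable_fun F u -> measurable_fun F v ->
  (forall x, A x -> u x <= v x) -> ERle (cint u) (cint v).
Proof.
  intros Hu Hv H. apply choquet_le_compat; simpl; auto; intros; apply level_measurable; auto.
Qed.

Lemma cint_ge0 u : ERle (Fin 0) (cint u).
Proof. apply int_0_inf_ge0. Qed.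

Lemma cint_ge_rect u t : 0 < t -> ERle (ERmulR t (mu (level u t))) (cint u).
Proof. intros Ht; apply (int_0_inf_ge_rect (fun t => mu (level u t)) t Ht). Qed.

Lemma cint_scal_le u c : 0 < c -> ERle (cint (fun x => c * u x)) (ERmulR c (cint u)).
Proof.
  intros Hc. rewrite !cint_levels.
  replace (fun t => mu (level (fun x => c * u x) t)) with (fun t => mu (level u (t / c))).
  { apply int_0_inf_scale_le with (phi := fun t => mu (level u t)); auto. }
  apply functional_extensionality; intros t. f_equal. apply pred_ext. intros x.
  unfold level. split; intros [Ha H]; split; auto.
  - apply (Rmult_le_compat_l c) in H; [|lra]. field_simplify in H; lra.
  - apply (Rmult_le_reg_l c); auto. field_simplify; lra.
Qed.

Lemma cint_scal u c : 0 < c -> cint (fun x => c * u x) = ERmulR c (cint u).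
Proof.
  intros Hc. apply ERle_antisym; [apply cint_scal_le; auto|].
  assert (Hci : 0 < / c) by (apply Rinv_0_lt_compat; lra).
  pose proof (cint_scal_le (fun x => c * u x) (/ c) Hci) as H.
  assert (E : (fun x => / c * (c * u x)) = u)
    by (apply functional_extensionality; intros x; field; lra).
  cbv beta in H; rewrite E in H.
  apply (ERmulR_le_compat c) in H; [|lra].
  rewrite ERmulR_mult, Rinv_r, ERmulR_1 in H by lra. exact H.
Qed.

Lemma level_finite u U t : 0 < t -> cint u = Fin U -> mu (level u t) = Fin (to_R (mu (level u t))).
Proof.
  intros Ht HU. pose proof (cint_ge_rect u t Ht) as T. rewrite HU in T.
  destruct (mu (level u t)); simpl; auto.
  rewrite ERmulR_Inf in T by auto. contradiction.
Qed.

Lemma grid_sum_le_cint u U d M : 0 < d -> cint u = Fin U ->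
  d * sum_after (fun j => to_R (mu (level u (INR j * d)))) 0 M <= U.
Proof.
  intros Hd HU.
  assert (Hi : incr_from 0 (grid d 0 M)).
  { pose proof (grid_incr d 0 M Hd) as H. simpl INR in H. rewrite Rmult_0_l in H. exact H. }
  pose proof (int_0_inf_ge_lower_sum (fun t => mu (level u t)) _ Hi) as T.
  rewrite <- cint_levels, HU, lower_sum_Fin in T by (auto; lra || (intros; apply (level_finite u U); auto)).
  pose proof (lower_sumR_grid (fun t => to_R (mu (level u t))) d 0 M) as E.
  simpl INR in E. rewrite Rmult_0_l in E. rewrite E in T. exact T.
Qed.

(** * Integer-valued functions *)

Definition nat_measurable (h : X -> nat) : Prop := forall k, F (fun x => (k <= h x)%nat).

Definition nat_level (h : X -> nat) (k : nat) : X -> Prop := fun x => A x /\ (k <= h x)%nat.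

Definition level_mass (h : X -> nat) (k : nat) : R := to_R (mu (nat_level h k)).

Definition finite_on_support (h : X -> nat) : Prop :=
  forall B, F B -> (forall x, B x -> A x /\ (1 <= h x)%nat) -> mu B = Fin (to_R (mu B)).

Lemma nat_level_measurable h k : nat_measurable h -> F (nat_level h k).
Proof. intros H; apply (measurable_inter F HF); auto. Qed.

Lemma nat_measurable_plus f g : nat_measurable f -> nat_measurable g ->
  nat_measurable (fun x => f x + g x)%nat.
Proof.
  intros Hf Hg k. eapply (measurable_ext F).
  - apply (measurable_countable_union F HF (fun i x => (i <= f x)%nat /\ (k - i <= g x)%nat)).
    intros i; apply (measurable_inter F HF); auto.
  - intros x; split.
    + intros [i [H1 H2]]; lia.
    + intros H; exists (f x); lia.
Qed.

Lemma nat_measurable_pred g : nat_measurable g -> nat_measurable (fun x => g x - 1)%nat.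
Proof.
  intros Hg [|k].
  - eapply (measurable_ext F); [apply (measurable_full F HF)|]. intros; split; intros; auto; lia.
  - eapply (measurable_ext F); [apply (Hg (S (S k)))|]. intros; split; intros; lia.
Qed.

Lemma nat_measurable_min f K : nat_measurable f -> nat_measurable (fun x => Nat.min (f x) K).
Proof.
  intros Hf j. destruct (le_lt_dec j K).
  - eapply (measurable_ext F); [apply (Hf j)|]. intros x; split; intros; lia.
  - eapply (measurable_ext F); [apply (measurable_empty F HF)|]. intros x; split; intros; [tauto|lia].
Qed.

Lemma level_mass_ge0 h k : nat_measurable h -> 0 <= level_mass h k.
Proof. intros; apply to_R_mu_ge0, nat_level_measurable; auto. Qed.

Lemma level_mass_beyond h k : (forall x, (h x < k)%nat) -> level_mass h k = 0.
Proof.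
  intros H; unfold level_mass. rewrite mu_empty; auto.
  intros x [_ Hx]; specialize (H x); lia.
Qed.

Lemma level_mass_ext f f' j : (forall x, (j <= f x)%nat <-> (j <= f' x)%nat) ->
  level_mass f j = level_mass f' j.
Proof.
  intros H; unfold level_mass, nat_level. f_equal; f_equal; apply pred_ext; intros x; rewrite H; tauto.
Qed.

Lemma finite_on_support_le f f' : finite_on_support f -> (forall x, (f' x <= f x)%nat) ->
  finite_on_support f'.
Proof.
  intros H Hle B HB HBs. apply H; auto. intros x Hx; destruct (HBs x Hx); split; auto.
  specialize (Hle x); lia.
Qed.

Lemma level_mass_le_finite h h' k : nat_measurable h -> nat_measurable h' ->
  finite_on_support h' -> (1 <= k)%nat -> (forall x, A x -> (k <= h x)%nat -> (k <= h' x)%nat) ->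
  level_mass h k <= level_mass h' k.
Proof.
  intros Hh Hh' Hfin Hk H. apply to_R_mu_le_compat; try apply nat_level_measurable; auto.
  - intros x [Ha Hx]; split; auto.
  - apply Hfin; [apply nat_level_measurable; auto|]. intros x [Ha Hx]; split; auto; lia.
Qed.

(* The level set [{f + g >= k}] is [P \/ Q] with [P /\ Q] one level set of
   [f + (g - 1)] restricted to [{g >= 1}]; this is where submodularity enters. *)
Lemma nat_level_plus_decomp f g k : (1 <= k)%nat ->
  let P := nat_level (fun x => f x + (g x - 1))%nat k in
  let Q := fun x => nat_level (fun x => f x + (g x - 1))%nat (k - 1) x /\ (1 <= g x)%nat in
  (fun x => P x \/ Q x) = nat_level (fun x => f x + g x)%nat k /\
  (fun x => P x /\ Q x) = (fun x => P x /\ (1 <= g x)%nat).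
Proof.
  intros Hk P Q. unfold P, Q, nat_level. split; apply pred_ext; intros x; split.
  - intros [[H1 H2]|[[H1 H2] H3]]; split; auto; lia.
  - intros [H1 H2]. destruct (Nat.le_gt_cases 1 (g x)).
    + destruct (Nat.le_gt_cases k (f x + (g x - 1))); [left|right]; repeat split; auto; lia.
    + left; split; auto; lia.
  - intros [[H1 H2] [[H3 H4] H5]]; auto.
  - intros [[H1 H2] H3]; repeat split; auto; lia.
Qed.

Lemma sum_level_mass_pred g M : (forall x, (g x < M)%nat) ->
  sum_after (level_mass (fun x => g x - 1)%nat) 0 M + level_mass g 1 = sum_after (level_mass g) 0 M.
Proof.
  intros HM. destruct M as [|M].
  - simpl. rewrite (level_mass_beyond g 1); [ring|]. intros x; specialize (HM x); lia.
  - rewrite (sum_after_ext _ (fun j => level_mass g (S j))).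
    + rewrite sum_after_shift, sum_after_last. cbn [sum_after].
      rewrite (level_mass_beyond g (1 + S M)); [ring|]. intros x; specialize (HM x); lia.
    + intros j Hj. unfold level_mass, nat_level. do 2 f_equal.
      apply pred_ext; intros x; split; intros [H1 H2]; split; auto; lia.
Qed.

(* With [s = 1] this is subadditivity of the discrete Choquet sums, with [s = -1]
   superadditivity; the induction peels one unit off [g] at a time. *)
Section SignedAdditivity.

Variable s : R.
Variable admissible : (X -> nat) -> (X -> nat) -> Prop.
Hypothesis admissible_pred : forall f g, admissible f g -> admissible f (fun x => g x - 1)%nat.
Hypothesis signed_step : forall f g, admissible f g -> nat_measurable f -> nat_measurable g ->
  finite_on_support (fun x => f x + g x)%nat -> forall k, (1 <= k)%nat ->
  let P := nat_level (fun x => f x + (g x - 1))%nat k in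
  let Q := fun x => nat_level (fun x => f x + (g x - 1))%nat (k - 1) x /\ (1 <= g x)%nat in
  s * (to_R (mu (fun x => P x \/ Q x)) + to_R (mu (fun x => P x /\ Q x))) <=
  s * (to_R (mu P) + to_R (mu Q)).

Lemma signed_level_sum_plus M n : forall f g, (forall x, (g x <= n)%nat) ->
  nat_measurable f -> nat_measurable g -> (forall x, (f x + g x < M)%nat) -> admissible f g ->
  finite_on_support (fun x => f x + g x)%nat ->
  s * sum_after (level_mass (fun x => f x + g x)%nat) 0 M <=
  s * (sum_after (level_mass f) 0 M + sum_after (level_mass g) 0 M).
Proof.
  induction n as [|n IH]; intros f g Hgn Hf Hg HM Hadm Hfin.
  { rewrite (sum_after_ext (level_mass g) (fun _ => 0)), sum_after_const0, Rplus_0_r.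
    - rewrite (sum_after_ext _ (level_mass f)); [lra|].
      intros j _; apply level_mass_ext; intros x; specialize (Hgn x); lia.
    - intros j Hj; apply level_mass_beyond; intros x; specialize (Hgn x); lia. }
  set (g' := fun x => (g x - 1)%nat).
  set (fg' := fun x => (f x + g' x)%nat).
  assert (Hg' : nat_measurable g') by (apply nat_measurable_pred; auto).
  assert (Hfg' : nat_measurable fg') by (apply nat_measurable_plus; auto).
  assert (IH' : s * sum_after (level_mass fg') 0 M <=
                s * (sum_after (level_mass f) 0 M + sum_after (level_mass g') 0 M)).
  { apply IH; auto.
    - intros x; unfold g'; specialize (Hgn x); lia.
    - intros x; unfold g'; specialize (HM x); lia.
    - apply admissible_pred; auto.
    - apply (finite_on_support_le _ _ Hfin); intros x; unfold fg', g'; lia. }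
  set (a := fun k => to_R (mu (fun x => nat_level fg' k x /\ (1 <= g x)%nat))).
  assert (Hstep : forall k, (0 < k)%nat ->
    s * level_mass (fun x => f x + g x)%nat k <= s * (level_mass fg' k + (a (k - 1)%nat - a k))).
  { intros k Hk. pose proof (signed_step f g Hadm Hf Hg Hfin k Hk) as T.
    destruct (nat_level_plus_decomp f g k Hk) as [E1 E2]. cbv beta zeta in T, E1, E2.
    rewrite E1, E2 in T. unfold level_mass, a. unfold fg', g' in *. lra. }
  assert (Tsum : s * sum_after (level_mass (fun x => f x + g x)%nat) 0 M <=
                 s * (sum_after (level_mass fg') 0 M + (a O - a M))).
  { pose proof (sum_after_telescope a 0 M) as TT. rewrite Nat.add_0_l in TT.
    rewrite <- TT, <- sum_after_plus, <- !sum_after_scal.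
    apply sum_after_le_compat. intros j Hj; apply Hstep; lia. }
  assert (HaM : a M = 0).
  { unfold a. rewrite mu_empty; auto. intros x [[_ H1] H2]. specialize (HM x). unfold fg', g' in H1. lia. }
  assert (Ha0 : a O = level_mass g 1).
  { unfold a, level_mass. do 2 f_equal. apply pred_ext; intros x; unfold nat_level; split.
    - intros [[H1 _] H2]; auto.
    - intros [H1 H2]; repeat split; auto; lia. }
  rewrite <- (sum_level_mass_pred g M) by (intros x; specialize (HM x); lia).
  fold g'. rewrite HaM, Ha0 in Tsum. lra.
Qed.

End SignedAdditivity.

Definition nat_comonotone (f g : X -> nat) : Prop := forall x y,
  ((g x < g y)%nat -> (f x <= f y)%nat) /\ ((f x < f y)%nat -> (g x <= g y)%nat).

Lemma to_R_submodular h P Q : submodular F mu -> finite_on_support h -> F P -> F Q ->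
  (forall x, P x -> A x /\ (1 <= h x)%nat) -> (forall x, Q x -> A x /\ (1 <= h x)%nat) ->
  to_R (mu (fun x => P x \/ Q x)) + to_R (mu (fun x => P x /\ Q x)) <= to_R (mu P) + to_R (mu Q).
Proof.
  intros Hs Hfin HP HQ SP SQ. pose proof (Hs P Q HP HQ) as T.
  rewrite (Hfin P), (Hfin Q), (Hfin (fun x => P x /\ Q x)), (Hfin (fun x => P x \/ Q x)) in T;
    auto; try apply (measurable_union F HF); try apply (measurable_inter F HF); auto.
  - simpl in T; lra.
  - intros x [Hx|Hx]; auto.
  - intros x [Hx _]; auto.
Qed.

Lemma to_R_modular h P Q : modular F mu -> finite_on_support h -> F P -> F Q ->
  (forall x, P x -> A x /\ (1 <= h x)%nat) -> (forall x, Q x -> A x /\ (1 <= h x)%nat) ->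
  to_R (mu (fun x => P x \/ Q x)) + to_R (mu (fun x => P x /\ Q x)) = to_R (mu P) + to_R (mu Q).
Proof.
  intros Hm Hfin HP HQ SP SQ. pose proof (Hm P Q HP HQ) as T.
  rewrite (Hfin P), (Hfin Q), (Hfin (fun x => P x /\ Q x)), (Hfin (fun x => P x \/ Q x)) in T;
    auto; try apply (measurable_union F HF); try apply (measurable_inter F HF); auto.
  - simpl in T. injection T; intros; lra.
  - intros x [Hx|Hx]; auto.
  - intros x [Hx _]; auto.
Qed.

Lemma to_R_nested P Q : (forall x, P x -> Q x) \/ (forall x, Q x -> P x) ->
  to_R (mu (fun x => P x \/ Q x)) + to_R (mu (fun x => P x /\ Q x)) = to_R (mu P) + to_R (mu Q).
Proof.
  intros [H|H].
  - rewrite (pred_ext (fun x => P x \/ Q x) Q), (pred_ext (fun x => P x /\ Q x) P) by firstorder.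
    ring.
  - rewrite (pred_ext (fun x => P x \/ Q x) P), (pred_ext (fun x => P x /\ Q x) Q) by firstorder.
    ring.
Qed.

Lemma step_sets_in_support f g k : nat_measurable f -> nat_measurable g -> (1 <= k)%nat ->
  let P := nat_level (fun x => f x + (g x - 1))%nat k in
  let Q := fun x => nat_level (fun x => f x + (g x - 1))%nat (k - 1) x /\ (1 <= g x)%nat in
  F P /\ F Q /\ (forall x, P x -> A x /\ (1 <= f x + g x)%nat) /\
  (forall x, Q x -> A x /\ (1 <= f x + g x)%nat).
Proof.
  intros Hf Hg Hk P Q.
  assert (HH : nat_measurable (fun x => f x + (g x - 1))%nat)
    by (apply nat_measurable_plus, nat_measurable_pred; auto).
  split; [|split; [|split]].
  - apply nat_level_measurable; auto.
  - apply (measurable_inter F HF); [apply nat_level_measurable; auto|apply Hg].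
  - intros x [H1 H2]; split; auto; lia.
  - intros x [[H1 H2] H3]; split; auto; lia.
Qed.

Lemma sum_level_mass_min f K M : (K <= M)%nat ->
  sum_after (level_mass (fun x => Nat.min (f x) K)) 0 M = sum_after (level_mass f) 0 K.
Proof.
  intros HKM. replace M with (K + (M - K))%nat by lia.
  rewrite sum_after_split, (sum_after_ext _ (fun _ => 0) (0 + K)), sum_after_const0, Rplus_0_r.
  - apply sum_after_ext. intros j Hj. apply level_mass_ext; intros x; lia.
  - intros j Hj. apply level_mass_beyond. intros x; lia.
Qed.

Lemma level_sum_plus_le f g K : submodular F mu -> nat_measurable f -> nat_measurable g ->
  finite_on_support (fun x => f x + g x)%nat ->
  sum_after (level_mass (fun x => f x + g x)%nat) 0 K <=
  sum_after (level_mass f) 0 K + sum_after (level_mass g) 0 K.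
Proof.
  intros Hs Hf Hg Hfin.
  set (f' := fun x => Nat.min (f x) K). set (g' := fun x => Nat.min (g x) K).
  set (M := S (K + K)).
  rewrite (sum_after_ext _ (level_mass (fun x => f' x + g' x)%nat))
    by (intros j Hj; apply level_mass_ext; intros x; unfold f', g'; lia).
  rewrite <- (sum_level_mass_min f K M), <- (sum_level_mass_min g K M) by (unfold M; lia).
  eapply Rle_trans.
  { apply (sum_after_le_length _ 0 K M); [|unfold M; lia].
    intros; apply level_mass_ge0, nat_measurable_plus; apply nat_measurable_min; auto. }
  rewrite <- (Rmult_1_l (sum_after _ 0 M)), <- (Rmult_1_l (_ + _)).
  apply (signed_level_sum_plus 1 (fun _ _ => True)) with (n := M); auto;
    try apply nat_measurable_min; auto; try (intros x; unfold f', g', M; lia).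
  - intros f0 g0 _ Hf0 Hg0 Hfin0 k Hk P Q.
    destruct (step_sets_in_support f0 g0 k Hf0 Hg0 Hk) as [HP [HQ [SP SQ]]].
    rewrite !Rmult_1_l. apply (to_R_submodular (fun x => f0 x + g0 x)%nat); auto.
  - apply (finite_on_support_le _ _ Hfin). intros x; unfold f', g'; lia.
Qed.

Lemma level_sum_plus_ge f g K : nat_measurable f -> nat_measurable g ->
  finite_on_support (fun x => f x + g x)%nat -> modular F mu \/ nat_comonotone f g ->
  sum_after (level_mass f) 0 K + sum_after (level_mass g) 0 K <=
  sum_after (level_mass (fun x => f x + g x)%nat) 0 (S (K + K)).
Proof.
  intros Hf Hg Hfin Hadm.
  set (f' := fun x => Nat.min (f x) K). set (g' := fun x => Nat.min (g x) K).
  set (M := S (K + K)).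
  assert (Hf' : nat_measurable f') by (apply nat_measurable_min; auto).
  assert (Hg' : nat_measurable g') by (apply nat_measurable_min; auto).
  rewrite <- (sum_level_mass_min f K M), <- (sum_level_mass_min g K M) by (unfold M; lia).
  fold f' g'.
  apply Rle_trans with (sum_after (level_mass (fun x => f' x + g' x)%nat) 0 M).
  2:{ apply sum_after_le_compat. intros j Hj.
      apply level_mass_le_finite; try apply nat_measurable_plus; auto; try lia.
      intros x _; unfold f', g'; lia. }
  enough (-1 * sum_after (level_mass (fun x => f' x + g' x)%nat) 0 M <=
          -1 * (sum_after (level_mass f') 0 M + sum_after (level_mass g') 0 M)) by lra.
  apply (signed_level_sum_plus (-1) (fun f0 g0 => modular F mu \/ nat_comonotone f0 g0))
    with (n := M); auto; try (intros x; unfold f', g', M; lia).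
  - intros f0 g0 [H|H]; [left; auto|right]. intros x y; specialize (H x y); split; intros; lia.
  - intros f0 g0 Hadm0 Hf0 Hg0 Hfin0 k Hk P Q.
    destruct (step_sets_in_support f0 g0 k Hf0 Hg0 Hk) as [HP [HQ [SP SQ]]].
    enough (E : to_R (mu (fun x => P x \/ Q x)) + to_R (mu (fun x => P x /\ Q x)) =
                to_R (mu P) + to_R (mu Q)) by lra.
    destruct Hadm0 as [Hm|Hcm]; [apply (to_R_modular (fun x => f0 x + g0 x)%nat); auto|].
    (* for comonotone [f0], [g0] the two sets are nested *)
    apply to_R_nested.
    destruct (classic (exists y, P y /\ ~ Q y)) as [[y [Py nQy]]|Hn].
    + right. intros x Qx. destruct Py as [Ay Hy], Qx as [[Ax Hx] Hgx].
      assert (g0 y = O) by (apply NNPP; intro; apply nQy; repeat split; auto; lia).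
      destruct (Hcm y x) as [H1 _]. specialize (H1 ltac:(lia)). split; auto; lia.
    + left. intros x Px. apply NNPP; intros nQ; apply Hn; eauto.
  - destruct Hadm as [H|H]; [left; auto|right].
    intros x y; specialize (H x y); unfold f', g'; split; intros; lia.
  - apply (finite_on_support_le _ _ Hfin). intros x; unfold f', g'; lia.
Qed.

(** * Additivity for real functions *)

Definition discretize (u : X -> R) (d : R) : X -> nat := fun x => nfloor (u x / d).

Lemma discretize_ge_iff u d k x : 0 < d -> 0 <= u x ->
  ((k <= discretize u d x)%nat <-> INR k * d <= u x).
Proof.
  intros Hd Hu. unfold discretize. rewrite nfloor_ge_iff.
  - split; intros H.
    + apply (Rmult_le_compat_r d) in H; [|lra]. field_simplify in H; lra.
    + apply (Rmult_le_reg_r d); auto. field_simplify; lra.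
  - apply Rmult_le_pos; [lra|left; apply Rinv_0_lt_compat; lra].
Qed.

Lemma discretize_gt u d x : 0 < d -> 0 <= u x -> u x / d - 1 < INR (discretize u d x).
Proof.
  intros Hd Hu. unfold discretize.
  destruct (nfloor_spec (u x / d)); [|lra].
  apply Rmult_le_pos; [lra|left; apply Rinv_0_lt_compat; lra].
Qed.

Lemma discretize_measurable u d : 0 < d -> measurable_fun F u -> (forall x, 0 <= u x) ->
  nat_measurable (discretize u d).
Proof.
  intros Hd Hu Hu0 k. eapply (measurable_ext F); [apply (Hu (INR k * d))|].
  intros x; rewrite discretize_ge_iff; auto; tauto.
Qed.

Lemma level_mass_discretize u d j : 0 < d -> (forall x, 0 <= u x) ->
  level_mass (discretize u d) j = to_R (mu (level u (INR j * d))).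
Proof.
  intros Hd Hu0. unfold level_mass, nat_level, level. do 2 f_equal; apply pred_ext; intros x.
  rewrite discretize_ge_iff; auto; tauto.
Qed.

Lemma nat_comonotone_discretize (u v : X -> R) d : 0 < d ->
  (forall x, 0 <= u x) -> (forall x, 0 <= v x) ->
  comonotone u v -> nat_comonotone (discretize u d) (discretize v d).
Proof.
  intros Hd Hu0 Hv0 Hc x y. unfold discretize.
  assert (Hmono : forall r r', 0 <= r -> r <= r' -> (nfloor (r / d) <= nfloor (r' / d))%nat).
  { intros r r' Hr Hrr'. apply nfloor_le_compat.
    - apply Rmult_le_pos; [lra|left; apply Rinv_0_lt_compat; lra].
    - apply Rmult_le_compat_r; [left; apply Rinv_0_lt_compat|]; lra. }
  specialize (Hc x y). split; intros H.
  - assert (v x < v y) by (apply Rnot_le_lt; intros Hle; specialize (Hmono _ _ (Hv0 y) Hle); lia).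
    apply Hmono; auto. nra.
  - assert (u x < u y) by (apply Rnot_le_lt; intros Hle; specialize (Hmono _ _ (Hu0 y) Hle); lia).
    apply Hmono; auto. nra.
Qed.

Lemma discretize_plus_le u v d k x : 0 < d -> 0 <= u x -> 0 <= v x ->
  (k <= discretize u d x + discretize v d x)%nat -> INR k * d <= u x + v x.
Proof.
  intros Hd Hu Hv Hk.
  assert (E1 : INR (discretize u d x) * d <= u x) by (apply discretize_ge_iff; auto).
  assert (E2 : INR (discretize v d x) * d <= v x) by (apply discretize_ge_iff; auto).
  apply le_INR in Hk; rewrite plus_INR in Hk. nra.
Qed.

Lemma finite_on_support_discretize u v d : 0 < d -> measurable_fun F u -> measurable_fun F v ->
  (forall x, 0 <= u x) -> (forall x, 0 <= v x) ->
  mu (level (fun x => u x + v x) d) = Fin (to_R (mu (level (fun x => u x + v x) d))) ->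
  finite_on_support (fun x => discretize u d x + discretize v d x)%nat.
Proof.
  intros Hd Hu Hv Hu0 Hv0 Hw B HB HBs. eapply ERle_Fin_to_R. rewrite <- Hw.
  apply mu_le_compat; auto; [apply level_measurable, measurable_fun_plus; auto|].
  intros x Hx; destruct (HBs x Hx) as [Ha H1]; split; auto.
  rewrite <- (Rmult_1_l d). apply (discretize_plus_le u v d 1); auto.
Qed.

Section Subadditivity.

Hypothesis Hs : submodular F mu.

Lemma level_plus_finite u v U V t : measurable_fun F u -> measurable_fun F v ->
  (forall x, 0 <= u x) -> 0 < t -> cint u = Fin U -> cint v = Fin V ->
  mu (level (fun x => u x + v x) t) = Fin (to_R (mu (level (fun x => u x + v x) t))).
Proof.
  intros Hu Hv Hu0 Ht HU HV.
  assert (T : ERle (mu (level (fun x => u x + v x) t))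
                   (ERadd (mu (level u (t / 2))) (mu (level v (t / 2))))).
  { eapply ERle_trans; [|apply mu_union_le; auto; apply level_measurable; auto].
    apply mu_le_compat.
    - apply level_measurable, measurable_fun_plus; auto.
    - apply (measurable_union F HF); apply level_measurable; auto.
    - intros x [Ha Hx]. destruct (Rle_dec (t / 2) (u x)); [left|right]; split; auto; lra. }
  rewrite (level_finite u U), (level_finite v V) in T by (auto; lra).
  eapply ERle_Fin_to_R; eauto.
Qed.

Lemma lower_sumR_level_plus_le u v U V d l : measurable_fun F u -> measurable_fun F v ->
  (forall x, 0 <= u x) -> (forall x, 0 <= v x) -> cint u = Fin U -> cint v = Fin V ->
  0 < d -> incr_from 0 l ->
  let phi := fun t => to_R (mu (level (fun x => u x + v x) t)) in
  lower_sumR phi 0 l <= U + V + d * 3 * sum_values phi l.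
Proof.
  intros Hu Hv Hu0 Hv0 HU HV Hd Hl phi.
  set (w := fun x => u x + v x).
  assert (Hw : measurable_fun F w) by (apply measurable_fun_plus; auto).
  set (f1 := discretize u d). set (g1 := discretize v d).
  assert (Hf1 : nat_measurable f1) by (apply discretize_measurable; auto).
  assert (Hg1 : nat_measurable g1) by (apply discretize_measurable; auto).
  assert (Hfin : finite_on_support (fun x => f1 x + g1 x)%nat)
    by (apply finite_on_support_discretize; auto; apply (level_plus_finite u v U V); auto).
  destruct (lower_sumR_le_grid_sum phi (level_mass (fun x => f1 x + g1 x)%nat) d 2)
    with (l := l) (prev := 0) (m := O) as [D HD]; auto; try lra.
  - intros t Ht; apply to_R_mu_ge0, level_measurable; auto.
  - intros t j Ht Hj Hjt. apply to_R_mu_le_compat; auto.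
    + apply level_measurable; auto.
    + apply nat_level_measurable, nat_measurable_plus; auto.
    + intros x [Ha Hx]; split; auto.
      pose proof (discretize_gt u d x Hd (Hu0 x)). pose proof (discretize_gt v d x Hd (Hv0 x)).
      assert (t / d <= (u x + v x) / d)
        by (apply Rmult_le_compat_r; [left; apply Rinv_0_lt_compat|]; lra).
      assert (INR j < INR (f1 x + g1 x)) by (rewrite plus_INR; unfold f1, g1; lra).
      apply INR_lt in H2; lia.
    + apply Hfin; [apply nat_level_measurable, nat_measurable_plus; auto|].
      intros x [Ha Hx]; split; auto; lia.
  - unfold Rdiv; rewrite Rmult_0_l. simpl. apply Rmax_l.
  - pose proof (level_sum_plus_le f1 g1 D Hs Hf1 Hg1 Hfin) as T. unfold f1, g1 in T.
    rewrite !(sum_after_ext (level_mass (discretize _ d)) (fun j => to_R (mu (level _ (INR j * d)))))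
      in T by (intros; apply level_mass_discretize; auto).
    pose proof (grid_sum_le_cint u U d D Hd HU). pose proof (grid_sum_le_cint v V d D Hd HV).
    apply (Rmult_le_compat_l d) in T; [|lra]. unfold f1, g1 in HD. lra.
Qed.

Theorem cint_plus_le u v : measurable_fun F u -> measurable_fun F v ->
  (forall x, 0 <= u x) -> (forall x, 0 <= v x) ->
  ERle (cint (fun x => u x + v x)) (ERadd (cint u) (cint v)).
Proof.
  intros Hu Hv Hu0 Hv0.
  destruct (cint u) as [U|] eqn:HU; [|destruct (cint (fun x => u x + v x)); simpl; auto].
  destruct (cint v) as [V|] eqn:HV; [|destruct (cint (fun x => u x + v x)); simpl; auto].
  simpl. rewrite cint_levels. apply int_0_inf_lub. intros l Hl.
  rewrite lower_sum_Fin by (auto; try lra; intros; apply (level_plus_finite u v U V); auto).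
  simpl. apply (le_epsilon_mult _ _ (3 * sum_values (fun t => to_R (mu (level (fun x => u x + v x) t))) l)).
  - assert (0 <= sum_values (fun t => to_R (mu (level (fun x => u x + v x) t))) l); [|lra].
    apply (sum_values_ge0 _ 0 l); auto; [lra|].
    intros; apply to_R_mu_ge0, level_measurable, measurable_fun_plus; auto.
  - intros d Hd. pose proof (lower_sumR_level_plus_le u v U V d l Hu Hv Hu0 Hv0 HU HV Hd Hl). lra.
Qed.

End Subadditivity.

Lemma lower_sumR_le_discrete_sum u U d l : measurable_fun F u -> (forall x, 0 <= u x) ->
  cint u = Fin U -> 0 < d -> incr_from 0 l ->
  let phi := fun t => to_R (mu (level u t)) in
  exists D, lower_sumR phi 0 l <= d * sum_after (level_mass (discretize u d)) 0 D + d * sum_values phi l.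
Proof.
  intros Hu Hu0 HU Hd Hl phi.
  destruct (lower_sumR_le_grid_sum phi (level_mass (discretize u d)) d 0)
    with (l := l) (prev := 0) (m := O) as [D HD]; auto; try lra.
  - intros t Ht; apply to_R_mu_ge0, level_measurable; auto.
  - intros t j Ht Hj Hjt. rewrite level_mass_discretize by auto.
    assert (Hjd : 0 < INR j * d) by (apply Rmult_lt_0_compat; auto; apply lt_0_INR; lia).
    apply to_R_mu_le_compat; try apply level_measurable; auto.
    + intros x [Ha Hx]; split; auto.
      apply (Rmult_le_compat_r d) in Hjt; [|lra]. field_simplify in Hjt; lra.
    + apply (level_finite u U); auto.
  - unfold Rdiv; rewrite Rmult_0_l, Rminus_0_r, Rmax_left by lra. simpl; lra.
  - exists D. lra.
Qed.

Lemma discrete_sum_plus_le_cint u v W d M : measurable_fun F u -> measurable_fun F v ->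
  (forall x, 0 <= u x) -> (forall x, 0 <= v x) -> cint (fun x => u x + v x) = Fin W -> 0 < d ->
  d * sum_after (level_mass (fun x => discretize u d x + discretize v d x)%nat) 0 M <= W.
Proof.
  intros Hu Hv Hu0 Hv0 HW Hd. eapply Rle_trans; [|apply (grid_sum_le_cint _ W d M Hd HW)].
  apply Rmult_le_compat_l; [lra|]. apply sum_after_le_compat. intros j Hj.
  assert (Hjd : 0 < INR j * d) by (apply Rmult_lt_0_compat; auto; apply lt_0_INR; lia).
  apply to_R_mu_le_compat.
  - apply nat_level_measurable, nat_measurable_plus; apply discretize_measurable; auto.
  - apply level_measurable, measurable_fun_plus; auto.
  - intros x [Ha Hx]; split; auto. apply discretize_plus_le; auto.
  - apply (level_finite _ W); auto.
Qed.

Lemma lower_sumR_levels_plus_le u v U V W l1 l2 : measurable_fun F u -> measurable_fun F v ->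
  (forall x, 0 <= u x) -> (forall x, 0 <= v x) -> modular F mu \/ comonotone u v ->
  cint u = Fin U -> cint v = Fin V -> cint (fun x => u x + v x) = Fin W ->
  incr_from 0 l1 -> incr_from 0 l2 ->
  lower_sumR (fun t => to_R (mu (level u t))) 0 l1 +
  lower_sumR (fun t => to_R (mu (level v t))) 0 l2 <= W.
Proof.
  intros Hu Hv Hu0 Hv0 Hadm HU HV HW Hl1 Hl2.
  set (phu := fun t => to_R (mu (level u t))). set (phv := fun t => to_R (mu (level v t))).
  apply (le_epsilon_mult _ _ (sum_values phu l1 + sum_values phv l2)).
  { assert (0 <= sum_values phu l1) by (apply (sum_values_ge0 _ 0 l1); auto; [lra|];
      intros; apply to_R_mu_ge0, level_measurable; auto).
    assert (0 <= sum_values phv l2) by (apply (sum_values_ge0 _ 0 l2); auto; [lra|];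
      intros; apply to_R_mu_ge0, level_measurable; auto).
    lra. }
  intros d Hd.
  set (f1 := discretize u d). set (g1 := discretize v d).
  assert (Hf1 : nat_measurable f1) by (apply discretize_measurable; auto).
  assert (Hg1 : nat_measurable g1) by (apply discretize_measurable; auto).
  assert (Hfin : finite_on_support (fun x => f1 x + g1 x)%nat)
    by (apply finite_on_support_discretize; auto; apply (level_finite _ W); auto).
  destruct (lower_sumR_le_discrete_sum u U d l1) as [D1 HD1]; auto.
  destruct (lower_sumR_le_discrete_sum v V d l2) as [D2 HD2]; auto.
  set (K := Nat.max D1 D2).
  assert (M1 : sum_after (level_mass f1) 0 D1 <= sum_after (level_mass f1) 0 K)
    by (apply sum_after_le_length; [intros; apply level_mass_ge0; auto|unfold K; lia]).
  assert (M2 : sum_after (level_mass g1) 0 D2 <= sum_after (level_mass g1) 0 K)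
    by (apply sum_after_le_length; [intros; apply level_mass_ge0; auto|unfold K; lia]).
  assert (Hadm1 : modular F mu \/ nat_comonotone f1 g1)
    by (destruct Hadm; [left|right; apply nat_comonotone_discretize]; auto).
  pose proof (level_sum_plus_ge f1 g1 K Hf1 Hg1 Hfin Hadm1) as T.
  pose proof (discrete_sum_plus_le_cint u v W d (S (K + K)) Hu Hv Hu0 Hv0 HW Hd) as T2.
  apply (Rmult_le_compat_l d) in M1, M2, T; try lra.
  unfold phu, phv. unfold f1, g1 in *. lra.
Qed.

Theorem cint_plus_ge u v : measurable_fun F u -> measurable_fun F v ->
  (forall x, 0 <= u x) -> (forall x, 0 <= v x) -> modular F mu \/ comonotone u v ->
  ERle (ERadd (cint u) (cint v)) (cint (fun x => u x + v x)).
Proof.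
  intros Hu Hv Hu0 Hv0 Hadm.
  destruct (cint (fun x => u x + v x)) as [W|] eqn:HW; [|apply ERle_Inf].
  assert (Hle : forall z, measurable_fun F z -> (forall x, z x <= u x + v x) ->
                exists Z, cint z = Fin Z).
  { intros z Hz Hzw. apply (ERle_Fin_is_Fin _ W). rewrite <- HW.
    apply cint_le_compat; auto. apply measurable_fun_plus; auto. }
  destruct (Hle u Hu) as [U HU]; [intros x; specialize (Hv0 x); lra|].
  destruct (Hle v Hv) as [V HV]; [intros x; specialize (Hu0 x); lra|].
  rewrite HU, HV. simpl.
  assert (Hlow : forall z Z, cint z = Fin Z -> forall e, 
    (forall l, incr_from 0 l -> lower_sumR (fun t => to_R (mu (level z t))) 0 l <= e) -> Z <= e).
  { intros z Z HZ e H. enough (ERle (cint z) (Fin e)) by (rewrite HZ in H0; exact H0).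
    apply int_0_inf_lub. intros l Hl.
    rewrite lower_sum_Fin by (auto; try lra; intros; apply (level_finite z Z); auto). apply H, Hl. }
  enough (U <= W - V) by lra.
  apply (Hlow u U HU). intros l1 Hl1.
  enough (V <= W - lower_sumR (fun t => to_R (mu (level u t))) 0 l1) by lra.
  apply (Hlow v V HV). intros l2 Hl2.
  pose proof (lower_sumR_levels_plus_le u v U V W l1 l2 Hu Hv Hu0 Hv0 Hadm HU HV HW Hl1 Hl2). lra.
Qed.

Lemma cint_lincomb_le c1 c2 u v : submodular F mu -> 0 < c1 -> 0 < c2 ->
  measurable_fun F u -> measurable_fun F v -> (forall x, 0 <= u x) -> (forall x, 0 <= v x) ->
  ERle (cint (fun x => c1 * u x + c2 * v x)) (ERadd (ERmulR c1 (cint u)) (ERmulR c2 (cint v))).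
Proof.
  intros Hs Hc1 Hc2 Hu Hv Hu0 Hv0. rewrite <- !cint_scal by auto.
  apply cint_plus_le; auto; try (apply measurable_fun_scal; auto; lra).
  all: intros x; apply Rmult_le_pos; auto; lra.
Qed.

Lemma cint_lincomb_ge c1 c2 u v : 0 < c1 -> 0 < c2 ->
  measurable_fun F u -> measurable_fun F v -> (forall x, 0 <= u x) -> (forall x, 0 <= v x) ->
  modular F mu \/ comonotone u v ->
  ERle (ERadd (ERmulR c1 (cint u)) (ERmulR c2 (cint v))) (cint (fun x => c1 * u x + c2 * v x)).
Proof.
  intros Hc1 Hc2 Hu Hv Hu0 Hv0 Hadm. rewrite <- !cint_scal by auto.
  apply cint_plus_ge; auto; try (apply measurable_fun_scal; auto; lra);
    try (intros x; apply Rmult_le_pos; auto; lra).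
  destruct Hadm as [H|H]; [left; auto|right]. intros x y.
  replace ((c1 * u x - c1 * u y) * (c2 * v x - c2 * v y))
    with ((c1 * c2) * ((u x - u y) * (v x - v y))) by ring.
  apply Rmult_le_pos; [left; apply Rmult_lt_0_compat; auto|apply H].
Qed.

Lemma cint_le0_of_null u Z : F Z -> measurable_fun F u ->
  (forall x, A x -> 0 < u x -> Z x) -> mu (fun x => A x /\ Z x) = Fin 0 -> ERle (cint u) (Fin 0).
Proof.
  intros HZ Hu HuZ H0. apply int_0_inf_le0. intros t Ht. rewrite <- H0.
  apply mu_le_compat; [apply level_measurable; auto|apply (measurable_inter F HF); auto|].
  intros x [Ha Hx]; split; auto. simpl in Hx. apply HuZ; auto; lra.
Qed.

(** * The Hoelder-type inequality *)

(* The real-valued part of [x |-> 1 / w x ^ e], set to [0] where the latter is [oo]. *)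
Definition inv_pow (w : X -> R) (e : R) (x : X) : R :=
  if Rle_dec (w x) 0 then 0 else / Rpower (w x) e.

Lemma inv_pow_ge0 w e x : 0 <= inv_pow w e x.
Proof.
  unfold inv_pow; destruct (Rle_dec (w x) 0); [lra|left; apply Rinv_0_lt_compat, Rpower_pos].
Qed.

Lemma inv_pow_pos w e x : 0 < w x -> Fin (inv_pow w e x) = ERinv (powR (w x) e).
Proof.
  intros Hw. unfold inv_pow, ERinv. rewrite powR_Rpower by auto.
  destruct (Rle_dec (w x) 0); [lra|].
  destruct (Req_EM_T (Rpower (w x) e) 0) as [E|E]; auto. pose proof (Rpower_pos (w x) e); lra.
Qed.

Lemma ERinv_powR_nonpos r e : r <= 0 -> ERinv (powR r e) = Inf.
Proof.
  intros Hr. rewrite powR_nonpos by auto. unfold ERinv. destruct (Req_EM_T 0 0); auto; lra.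
Qed.

Lemma inv_pow_le w e x : ERle (Fin (inv_pow w e x)) (ERinv (powR (w x) e)).
Proof.
  destruct (Rle_dec (w x) 0) as [Hw|Hw].
  - rewrite ERinv_powR_nonpos by auto. apply ERle_Inf.
  - rewrite inv_pow_pos by lra. apply ERle_refl.
Qed.

Lemma inv_pow_ge_iff w e t x : 0 < e -> 0 < t -> 0 < w x ->
  (t <= inv_pow w e x <-> w x <= Rpower (/ t) (/ e)).
Proof.
  intros He Ht Hw. unfold inv_pow. destruct (Rle_dec (w x) 0); [lra|].
  apply Rpower_le_inv_iff; auto.
Qed.

Lemma inv_pow_measurable w e : 0 < e -> measurable_fun F w -> measurable_fun F (inv_pow w e).
Proof.
  intros He Hw t. destruct (Rle_dec t 0) as [Ht|Ht].
  - eapply (measurable_ext F); [apply (measurable_full F HF)|].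
    intros x; split; auto; intros _; pose proof (inv_pow_ge0 w e x); lra.
  - eapply (measurable_ext F).
    + apply (measurable_inter F HF (fun x => 0 < w x) (fun x => w x <= Rpower (/ t) (/ e)));
        [apply measurable_fun_gt|apply measurable_fun_le]; auto.
    + intros x. destruct (Rle_dec (w x) 0) as [Hwx|Hwx].
      * unfold inv_pow. destruct (Rle_dec (w x) 0); [|lra]. split; [intros [H _]|intros H]; lra.
      * rewrite inv_pow_ge_iff by lra. split; [intros [_ H]; auto|intros H; split; auto; lra].
Qed.

Lemma ERinv_powR_level_measurable w e t : 0 < e -> 0 < t -> measurable_fun F w ->
  F (fun x => A x /\ ERle (Fin t) (ERinv (powR (w x) e))).
Proof.
  intros He Ht Hw. eapply (measurable_ext F).
  { apply (measurable_inter F HF A (fun x => w x <= Rpower (/ t) (/ e))); auto.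
    apply (measurable_fun_le F HF); auto. }
  intros x. destruct (Rle_dec (w x) 0) as [Hwx|Hwx].
  - rewrite ERinv_powR_nonpos by auto. simpl.
    pose proof (Rpower_pos (/ t) (/ e)). split; intros [Ha Hx]; split; auto; lra.
  - rewrite <- inv_pow_pos, <- (inv_pow_ge_iff w e t) by lra. simpl. tauto.
Qed.

Lemma choquet_inv_pow_ge w e : 0 < e -> measurable_fun F w ->
  ERle (cint (inv_pow w e)) (choquet mu A (fun x => ERinv (powR (w x) e))).
Proof.
  intros He Hw. apply choquet_le_compat.
  - intros; apply level_measurable, inv_pow_measurable; auto.
  - intros; apply ERinv_powR_level_measurable; auto.
  - intros; apply inv_pow_le.
Qed.

Lemma choquet_inv_pow_eq w e : (forall x, 0 < w x) ->
  choquet mu A (fun x => ERinv (powR (w x) e)) = cint (inv_pow w e).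
Proof.
  intros Hw. unfold cint. f_equal. apply functional_extensionality; intros x.
  rewrite inv_pow_pos; auto.
Qed.

Lemma choquet_inv_pow_finite_null w e be : 0 < e -> measurable_fun F w ->
  choquet mu A (fun x => ERinv (powR (w x) e)) = Fin be -> mu (fun x => A x /\ w x <= 0) = Fin 0.
Proof.
  intros He Hw Hbe. set (Z := fun x => A x /\ w x <= 0).
  assert (HZ : F Z) by (apply (measurable_inter F HF); auto; apply measurable_fun_le; auto).
  assert (Hbound : forall t, 0 < t -> ERle (ERmulR t (mu Z)) (Fin be)).
  { intros t Ht. rewrite <- Hbe. eapply ERle_trans;
      [|apply (int_0_inf_ge_rect (fun t => mu (fun x => A x /\ ERle (Fin t) (ERinv (powR (w x) e)))) t Ht)].
    apply ERmulR_le_compat; [lra|]. apply mu_le_compat; auto; [apply ERinv_powR_level_measurable; auto|].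
    intros x [Ha Hx]; split; auto. rewrite ERinv_powR_nonpos by auto. apply ERle_Inf. }
  pose proof (mu_ge0 Z HZ) as H0.
  destruct (mu Z) as [z|] eqn:Ez.
  2:{ specialize (Hbound 1 ltac:(lra)). rewrite ERmulR_Inf in Hbound by lra. contradiction. }
  simpl in H0. f_equal. destruct H0 as [Hz|Hz]; auto. exfalso.
  specialize (Hbound ((Rabs be + 1) / z) ltac:(apply Rdiv_lt_0_compat; auto; pose proof (Rabs_pos be); lra)).
  simpl in Hbound. field_simplify in Hbound; [|lra]. pose proof (Rle_abs be). lra.
Qed.

Definition on_nonpos (w u : X -> R) (x : X) : R := if Rle_dec (w x) 0 then u x else 0.

Lemma on_nonpos_measurable w u : measurable_fun F w -> measurable_fun F u ->
  (forall x, 0 <= u x) -> measurable_fun F (on_nonpos w u).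
Proof.
  intros Hw Hu Hu0 t. unfold on_nonpos. destruct (Rle_dec t 0) as [Ht|Ht].
  - eapply (measurable_ext F); [apply (measurable_full F HF)|]. intros x; split; auto; intros _.
    pose proof (Hu0 x). destruct (Rle_dec (w x) 0); lra.
  - eapply (measurable_ext F).
    + apply (measurable_inter F HF (fun x => w x <= 0) (fun x => t <= u x)); auto.
      apply (measurable_fun_le F HF); auto.
    + intros x. destruct (Rle_dec (w x) 0); split; intros; try tauto; lra.
Qed.

Lemma cint_on_nonpos_null w u : measurable_fun F w -> measurable_fun F u ->
  (forall x, 0 <= u x) -> mu (fun x => A x /\ w x <= 0) = Fin 0 ->
  ERle (cint (on_nonpos w u)) (Fin 0).
Proof.
  intros Hw Hu Hu0 Hnull. apply (cint_le0_of_null _ (fun x => w x <= 0)); auto.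
  - apply (measurable_fun_le F HF); auto.
  - apply on_nonpos_measurable; auto.
  - intros x _. unfold on_nonpos. destruct (Rle_dec (w x) 0); auto; lra.
Qed.

Section Hoelder.

Variables (p q : R) (f g h : X -> R) (a b : R).
Hypothesis Hp : 1 < p.
Hypothesis Hconj : / p + / q = 1.
Hypotheses (Hf : measurable_fun F f) (Hg : measurable_fun F g) (Hh : measurable_fun F h).
Hypotheses (Hf0 : forall x, 0 <= f x) (Hg0 : forall x, 0 <= g x) (Hh0 : forall x, 0 <= h x).
Hypotheses (Ha : cint (fun x => g x * powR (f x) p) = Fin a) (Ha0 : 0 < a).
Hypotheses (Hb : cint (fun x => h x * powR (f x) p) = Fin b) (Hb0 : 0 < b).

Lemma weighted_power_measurable (k : X -> R) : measurable_fun F k -> (forall x, 0 <= k x) ->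
  measurable_fun F (fun x => k x * powR (f x) p).
Proof.
  intros Hk Hk0. apply measurable_fun_mult; auto; [apply measurable_fun_powR; auto; lra|].
  intros; apply powR_ge0.
Qed.

Lemma weight_measurable : measurable_fun F (fun x => b * g x + a * h x).
Proof.
  apply measurable_fun_plus; try apply measurable_fun_scal; auto; try lra.
  intros; apply Rmult_le_pos; auto; lra.
Qed.

Lemma weighted_sum_measurable :
  measurable_fun F (fun x => b * (g x * powR (f x) p) + a * (h x * powR (f x) p)) /\
  forall x, 0 <= b * (g x * powR (f x) p) + a * (h x * powR (f x) p).
Proof.
  assert (Hgp0 : forall x, 0 <= g x * powR (f x) p) by (intros; apply Rmult_le_pos; auto; apply powR_ge0).
  assert (Hhp0 : forall x, 0 <= h x * powR (f x) p) by (intros; apply Rmult_le_pos; auto; apply powR_ge0).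
  split.
  - apply measurable_fun_plus; try apply measurable_fun_scal; try apply weighted_power_measurable;
      auto; try lra. intros; apply Rmult_le_pos; auto; lra.
  - intros x. specialize (Hgp0 x); specialize (Hhp0 x). nra.
Qed.

Lemma cint_weighted_sum_le : submodular F mu ->
  ERle (cint (fun x => b * (g x * powR (f x) p) + a * (h x * powR (f x) p))) (Fin (2 * (a * b))).
Proof.
  intros Hs. eapply ERle_trans.
  - apply cint_lincomb_le; auto; try apply weighted_power_measurable; auto;
      intros; apply Rmult_le_pos; auto; apply powR_ge0.
  - rewrite Ha, Hb. simpl. lra.
Qed.

Lemma young_pointwise s x : 0 < s ->
  f x <= s / p * (b * (g x * powR (f x) p) + a * (h x * powR (f x) p)) +
         Rpower s (1 - q) / q * inv_pow (fun x => b * g x + a * h x) (q - 1) x +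
         on_nonpos (fun x => b * g x + a * h x) f x.
Proof.
  intros Hs. destruct (conjugate_exponent p q Hp Hconj) as [Hip Hq].
  assert (0 <= g x * powR (f x) p) by (apply Rmult_le_pos; auto; apply powR_ge0).
  assert (0 <= h x * powR (f x) p) by (apply Rmult_le_pos; auto; apply powR_ge0).
  unfold on_nonpos, inv_pow. destruct (Rle_dec (b * g x + a * h x) 0) as [Hw|Hw].
  - assert (0 <= s / p * (b * (g x * powR (f x) p) + a * (h x * powR (f x) p))).
    { apply Rmult_le_pos; [apply Rmult_le_pos; lra|nra]. }
    lra.
  - rewrite Rplus_0_r.
    replace (b * (g x * powR (f x) p) + a * (h x * powR (f x) p))
      with ((b * g x + a * h x) * powR (f x) p) by ring.
    apply young_scaled; auto; lra.
Qed.

Lemma cint_young_bound be s : submodular F mu ->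
  choquet mu A (fun x => ERinv (powR (b * g x + a * h x) (q - 1))) = Fin be -> 0 < s ->
  ERle (cint f) (Fin (s / p * (2 * (a * b)) + Rpower s (1 - q) / q * be)).
Proof.
  intros Hs Hbe Hs0. destruct (conjugate_exponent p q Hp Hconj) as [Hip Hq].
  set (w := fun x => b * g x + a * h x) in Hbe |- *.
  assert (Hw := weight_measurable).
  set (c1 := s / p). set (c2 := Rpower s (1 - q) / q).
  assert (Hc1 : 0 < c1) by (apply Rdiv_lt_0_compat; lra).
  assert (Hc2 : 0 < c2) by (apply Rdiv_lt_0_compat; [apply Rpower_pos|lra]).
  assert (HWb := cint_weighted_sum_le Hs).
  set (W := fun x => b * (g x * powR (f x) p) + a * (h x * powR (f x) p)) in *.
  assert (HW : measurable_fun F W) by apply weighted_sum_measurable.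
  assert (HW0 : forall x, 0 <= W x) by apply weighted_sum_measurable.
  set (r := inv_pow w (q - 1)).
  assert (Hr : measurable_fun F r) by (apply inv_pow_measurable; auto; lra).
  assert (Hrb : ERle (cint r) (Fin be)) by (rewrite <- Hbe; apply choquet_inv_pow_ge; auto; lra).
  assert (Hz0 : ERle (cint (on_nonpos w f)) (Fin 0)).
  { apply cint_on_nonpos_null; auto. apply (choquet_inv_pow_finite_null w (q - 1) be); auto; lra. }
  assert (HY : measurable_fun F (fun x => c1 * W x + c2 * r x))
    by (apply (measurable_fun_plus F HF); try (apply (measurable_fun_scal F HF); auto; lra);
        intros; apply Rmult_le_pos; auto; lra).
  assert (HY0 : forall x, 0 <= c1 * W x + c2 * r x)
    by (intros; apply Rplus_le_le_0_compat; apply Rmult_le_pos; auto; try lra; apply inv_pow_ge0).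
  eapply ERle_trans.
  { apply (cint_le_compat f (fun x => (c1 * W x + c2 * r x) + on_nonpos w f x) Hf);
      [apply measurable_fun_plus; auto; apply on_nonpos_measurable; auto|].
    intros x _; apply young_pointwise; auto. }
  eapply ERle_trans; [apply cint_plus_le; auto|].
  { apply on_nonpos_measurable; auto. }
  { intros x; unfold on_nonpos; destruct (Rle_dec (w x) 0); auto; lra. }
  apply (ERle_trans _ (ERadd (ERadd (Fin (c1 * (2 * (a * b)))) (Fin (c2 * be))) (Fin 0)));
    [|simpl; lra].
  apply ERadd_le_compat; auto.
  eapply ERle_trans; [apply cint_lincomb_le; auto; apply inv_pow_ge0|].
  apply ERadd_le_compat; apply ERmulR_le_compat with (v := Fin _); auto; lra.
Qed.

Lemma cint_hoelder_le : submodular F mu ->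
  ERle (cint f) (ERmulR (powR 2 (/ p)) (Hpq mu A p q g h a b)).
Proof.
  intros Hs. destruct (conjugate_exponent p q Hp Hconj) as [Hip Hq]. unfold Hpq.
  assert (Hab : 0 < a * b) by (apply Rmult_lt_0_compat; auto).
  rewrite !powR_Rpower by lra.
  destruct (choquet mu A (fun x => ERinv (powR (b * g x + a * h x) (q - 1)))) as [be|] eqn:Hbe.
  2:{ simpl ERpow. rewrite !ERmulR_Inf by apply Rpower_pos. apply ERle_Inf. }
  pose proof (int_0_inf_ge0 (fun t => mu (fun x => A x /\ ERle (Fin t) (ERinv (powR (b * g x + a * h x) (q - 1))))))
    as Hbe0.
  change (ERle (Fin 0) (choquet mu A (fun x => ERinv (powR (b * g x + a * h x) (q - 1))))) in Hbe0.
  rewrite Hbe in Hbe0. simpl in Hbe0.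
  assert (Hbound := fun s => cint_young_bound be s Hs Hbe).
  destruct (cint f) as [cf|] eqn:Hcf.
  2:{ specialize (Hbound 1 ltac:(lra)). contradiction. }
  simpl. destruct Hbe0 as [Hbe0| <-].
  - pose proof (young_scaled_optimum (2 * (a * b)) be p q Hp Hconj ltac:(lra) Hbe0) as Opt.
    specialize (Hbound _ (Rpower_pos (be / (2 * (a * b))) (/ q))).
    simpl in Hbound. rewrite Opt, <- Rpower_mult_distr in Hbound by lra.
    rewrite powR_Rpower by lra. lra.
  - rewrite powR_nonpos, !Rmult_0_r by lra.
    apply (le_epsilon_mult _ _ (2 * (a * b) / p)).
    + apply Rmult_le_pos; lra.
    + intros d Hd. specialize (Hbound d Hd). simpl in Hbound. unfold Rdiv in *. nra.
Qed.

Section Extremal.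

Variable gamma : R.
Hypothesis Hgamma0 : 0 <= gamma.
Hypothesis Hgamma : forall x, powR (b * g x + a * h x) q * powR (f x) p = gamma.

Lemma extremal_gamma_pos : 0 < gamma.
Proof.
  destruct Hgamma0 as [|<-]; auto. exfalso.
  assert (Hz : ERle (cint (fun x => g x * powR (f x) p)) (Fin 0)).
  { apply (cint_le0_of_null _ (fun _ => False)); [apply (measurable_empty F HF)|
      apply weighted_power_measurable; auto| |apply mu_empty; tauto].
    intros x _ Hx. specialize (Hgamma x). pose proof (Hg0 x); pose proof (Hh0 x).
    destruct (Rle_dec (b * g x + a * h x) 0) as [Hw|Hw].
    - assert (g x = 0) by nra. nra.
    - rewrite (powR_Rpower (b * g x + a * h x)) in Hgamma by lra.
      pose proof (Rpower_pos (b * g x + a * h x) q).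
      assert (powR (f x) p = 0) by nra. nra. }
  rewrite Ha in Hz. simpl in Hz. lra.
Qed.

Lemma extremal_weight_pos x : 0 < b * g x + a * h x.
Proof.
  pose proof extremal_gamma_pos. specialize (Hgamma x).
  apply Rnot_le_lt; intros Hw. rewrite powR_nonpos in Hgamma by auto. lra.
Qed.

Lemma extremal_f_pos x : 0 < f x.
Proof.
  pose proof extremal_gamma_pos. specialize (Hgamma x).
  apply Rnot_le_lt; intros Hx. rewrite (powR_nonpos (f x)), Rmult_0_r in Hgamma by auto. lra.
Qed.

Lemma extremal_f_eq x :
  f x = Rpower gamma (/ p) * inv_pow (fun x => b * g x + a * h x) (q - 1) x.
Proof.
  unfold inv_pow. destruct (Rle_dec _ 0) as [Hw|_]; [pose proof (extremal_weight_pos x); lra|].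
  apply (Rpower_eq_solve (b * g x + a * h x) (f x) gamma p q Hp Hconj);
    [apply extremal_weight_pos|apply extremal_f_pos|].
  pose proof (Hgamma x) as Hx.
  rewrite !powR_Rpower in Hx by (apply extremal_weight_pos || apply extremal_f_pos). exact Hx.
Qed.

Lemma extremal_weighted_sum_eq x :
  b * (g x * powR (f x) p) + a * (h x * powR (f x) p)
  = gamma * inv_pow (fun x => b * g x + a * h x) (q - 1) x.
Proof.
  unfold inv_pow. destruct (Rle_dec _ 0) as [Hw|_]; [pose proof (extremal_weight_pos x); lra|].
  replace (b * (g x * powR (f x) p) + a * (h x * powR (f x) p))
    with ((b * g x + a * h x) * powR (f x) p) by ring.
  apply Rpower_mult_eq_div; [apply extremal_weight_pos|].
  pose proof (Hgamma x) as Hx. rewrite powR_Rpower in Hx by apply extremal_weight_pos. exact Hx.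
Qed.

Lemma cint_hoelder_eq : submodular F mu ->
  modular F mu \/ comonotone (fun x => g x * powR (f x) p) (fun x => h x * powR (f x) p) ->
  cint f = ERmulR (powR 2 (/ p)) (Hpq mu A p q g h a b).
Proof.
  intros Hs Hadm. destruct (conjugate_exponent p q Hp Hconj) as [Hip Hq].
  pose proof extremal_gamma_pos as Hgam.
  set (r := inv_pow (fun x => b * g x + a * h x) (q - 1)).
  set (c := Rpower gamma (/ p)).
  assert (Hr : measurable_fun F r) by (apply inv_pow_measurable; [lra|apply weight_measurable]).
  assert (Hcf : cint f = ERmulR c (cint r)).
  { rewrite <- cint_scal by apply Rpower_pos. unfold cint. f_equal.
    apply functional_extensionality; intros x. rewrite extremal_f_eq at 1. reflexivity. }
  apply ERle_antisym; [apply cint_hoelder_le; auto|].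
  unfold Hpq. rewrite choquet_inv_pow_eq by apply extremal_weight_pos. fold r. rewrite Hcf.
  destruct (cint r) as [be|] eqn:Hbe.
  2:{ rewrite (ERmulR_Inf c) by apply Rpower_pos. apply ERle_Inf. }
  assert (Hkey : 2 * (a * b) <= gamma * be).
  { enough (ERle (Fin (2 * (a * b))) (Fin (gamma * be))) by auto.
    apply (ERle_trans _ (ERadd (ERmulR b (cint (fun x => g x * powR (f x) p)))
                               (ERmulR a (cint (fun x => h x * powR (f x) p))))).
    { rewrite Ha, Hb. simpl. lra. }
    eapply ERle_trans; [apply cint_lincomb_ge; auto; try apply weighted_power_measurable; auto;
                        intros; apply Rmult_le_pos; auto; apply powR_ge0|].
    cbv beta. rewrite (functional_extensionality _ _ extremal_weighted_sum_eq), cint_scal by auto.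
    fold r. rewrite Hbe.
    apply ERle_refl. }
  assert (Hbe0 : 0 < be).
  { pose proof (cint_ge0 r) as H0. rewrite Hbe in H0. simpl in H0.
    destruct H0 as [|<-]; auto. assert (0 < a * b) by (apply Rmult_lt_0_compat; auto). nra. }
  simpl. rewrite !powR_Rpower by (auto; try apply Rmult_lt_0_compat; lra).
  rewrite <- Rmult_assoc, (Rpower_mult_distr 2 (a * b)) by (try apply Rmult_lt_0_compat; lra).
  apply Rpower_conj_mult_le; auto. apply Rmult_lt_0_compat; [lra|apply Rmult_lt_0_compat; auto].
Qed.

End Extremal.

End Hoelder.

End Choquet.

Theorem mainTheorem7 (X : Type) (F : (X -> Prop) -> Prop)
  (mu : (X -> Prop) -> ER) (A : X -> Prop) (p q : R) (f g h : X -> R) (a b : R) :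
  sigma_algebra F -> monotone_measure F mu -> submodular F mu -> F A ->
  1 < p -> / p + / q = 1 ->
  measurable_fun F f -> measurable_fun F g -> measurable_fun F h ->
  (forall x, 0 <= f x) -> (forall x, 0 <= g x) -> (forall x, 0 <= h x) ->
  choquet mu A (fun x => Fin (g x * powR (f x) p)) = Fin a -> 0 < a ->
  choquet mu A (fun x => Fin (h x * powR (f x) p)) = Fin b -> 0 < b ->
  ERle (choquet mu A (fun x => Fin (f x)))
       (ERmulR (powR 2 (/ p)) (Hpq mu A p q g h a b)) /\
  ((exists gamma, 0 <= gamma /\
      forall x, powR (b * g x + a * h x) q * powR (f x) p = gamma) ->
   (modular F mu \/
    comonotone (fun x => g x * powR (f x) p) (fun x => h x * powR (f x) p)) ->
   choquet mu A (fun x => Fin (f x))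
   = ERmulR (powR 2 (/ p)) (Hpq mu A p q g h a b)).
Proof.
  intros HF Hmu Hs HA Hp Hconj Hf Hg Hh Hf0 Hg0 Hh0 Ha Ha0 Hb Hb0. split.
  - eapply cint_hoelder_le; eauto.
  - intros [gamma [Hgamma0 Hgamma]] Hadm. eapply cint_hoelder_eq; eauto.
Qed.
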